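(* Let $\Lambda$ be an isolated set of a partial flow $\phi$ on a metric space $X$. Let $N$ be an isolating neighborhood of $\Lambda$ and $\mathcal L_1\colon N\to\mathbb{R}$ a catenary function for $\Lambda$. Let $\delta>0$ be such that $\mathcal B=\{x\in N:\mathcal L_1(x)\le\delta\}$ is contained in the interior of $N$, and let $\partial\mathcal B$ denote the boundary of $\mathcal B$. Let $a\colon\mathcal B\setminus\Lambda\to(0,\infty)$ be continuous with $\dot a=0$ and $\inf a>0$, and let $f\colon\partial\mathcal B\to\mathbb{R}$ be continuous. Then there is a unique continuous function $\mathcal L_2\colon\mathcal B\to\mathbb{R}$ such that: - $\mathcal L_2(\Lambda)=0$; - $\ddot{\mathcal L}_2(x)=a(x)^2\mathcal L_2(x)$ for all $x\in\mathcal B\setminus\Lambda$; - $\mathcal L_2(x)=f(x)$ for all $x\in\partial\mathcal B$. If in addition $f>0$, then $\mathcal L_2(x)>0$ for all $x\in\mathcal B\setminus\Lambda$.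
   Context: A partial flow on a metric space $X$ is a continuous map $\phi\colon\Gamma\to X$ on an open set $\Gamma\subset\mathbb{R}\times X$. Here $\Gamma_x=\{t:(t,x)\in\Gamma\}$ is a connected set containing $0$, $\Gamma_{\phi_t(x)}=\Gamma_x-t$, $\phi_0=\mathrm{id}$, and $\phi_s\phi_t=\phi_{s+t}$ where defined. A $\phi$-invariant set $\Lambda$ is isolated if it has a compact neighborhood $N$ (an isolating neighborhood) such that $\phi_{\Gamma_x}(x)\subseteq N$ implies $x\in\Lambda$. $\dot{\mathcal L}(x)=\lim_{t\to0}(\mathcal L(\phi_t(x))-\mathcal L(x))/t$ and $\ddot{\mathcal L}=(\dot{\mathcal L})^{\cdot}$. A catenary function for $\Lambda$ is a continuous $\mathcal L\colon N\to\mathbb{R}$ on an isolating neighborhood $N$ with $\mathcal L(\Lambda)=0$, $\mathcal L>0$ on $N\setminus\Lambda$, and $\ddot{\mathcal L}=\mathcal L$ on $N$. *)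

From Stdlib Require Import Reals List.
Open Scope R_scope.

Section Defs.
Variable M : Metric_Space.
Local Notation X := (Base M).
Local Notation d := (dist M).

Definition in_ball (x : X) (r : R) (y : X) : Prop := d y x < r.

Definition m_open (U : X -> Prop) : Prop :=
  forall x, U x -> exists eps, eps > 0 /\ forall y, d y x < eps -> U y.

Definition m_interior (S : X -> Prop) (x : X) : Prop :=
  exists eps, eps > 0 /\ forall y, d y x < eps -> S y.

Definition m_closure (S : X -> Prop) (x : X) : Prop :=
  forall eps, eps > 0 -> exists y, S y /\ d y x < eps.

Definition m_boundary (S : X -> Prop) (x : X) : Prop :=
  m_closure S x /\ ~ m_interior S x.

Definition m_compact (K : X -> Prop) : Prop :=
  forall (I : Type) (U : I -> X -> Prop),
    (forall i, m_open (U i)) ->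
    (forall x, K x -> exists i, U i x) ->
    exists l : list I, forall x, K x -> exists i, In i l /\ U i x.

Definition m_continuous_on (D : X -> Prop) (g : X -> R) : Prop :=
  forall x, D x -> forall eps, eps > 0 -> exists delta, delta > 0 /\
    forall y, D y -> d y x < delta -> Rabs (g y - g x) < eps.

(* Partial flow: phi is defined (meaningfully) on Gamma ⊆ R × X. *)
Record partial_flow (Gamma : R -> X -> Prop) (phi : R -> X -> X) : Prop := {
  pf_open : forall t x, Gamma t x -> exists eps, eps > 0 /\
      forall s y, Rabs (s - t) < eps -> d y x < eps -> Gamma s y;
  pf_cont : forall t x, Gamma t x -> forall eps, eps > 0 -> exists delta, delta > 0 /\
      forall s y, Gamma s y -> Rabs (s - t) < delta -> d y x < delta ->
        d (phi s y) (phi t x) < eps;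
  pf_zero_in : forall x, Gamma 0 x;
  pf_connected : forall x s t u, Gamma s x -> Gamma u x -> s <= t <= u -> Gamma t x;
  pf_shift : forall t x, Gamma t x -> forall s, Gamma s (phi t x) <-> Gamma (s + t) x;
  pf_id : forall x, phi 0 x = x;
  pf_comp : forall s t x, Gamma t x -> Gamma s (phi t x) -> phi s (phi t x) = phi (s + t) x
}.

Definition invariant (Gamma : R -> X -> Prop) (phi : R -> X -> X) (L : X -> Prop) : Prop :=
  forall x t, L x -> Gamma t x -> L (phi t x).

Definition isolating_neighborhood (Gamma : R -> X -> Prop) (phi : R -> X -> X)
    (Lam N : X -> Prop) : Prop :=
  m_compact N /\ (forall x, Lam x -> m_interior N x) /\
  (forall x, (forall t, Gamma t x -> N (phi t x)) -> Lam x).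

Definition orb_deriv (Gamma : R -> X -> Prop) (phi : R -> X -> X)
    (D : X -> Prop) (g : X -> R) (x : X) (l : R) : Prop :=
  forall eps, eps > 0 -> exists delta, delta > 0 /\
    forall t, t <> 0 -> Rabs t < delta -> Gamma t x -> D (phi t x) ->
      Rabs ((g (phi t x) - g x) / t - l) < eps.

Definition catenary (Gamma : R -> X -> Prop) (phi : R -> X -> X)
    (Lam N : X -> Prop) (L : X -> R) : Prop :=
  m_continuous_on N L /\
  (forall x, Lam x -> L x = 0) /\
  (forall x, N x -> ~ Lam x -> L x > 0) /\
  exists Ld : X -> R,
    (forall x, N x -> orb_deriv Gamma phi N L x (Ld x)) /\
    (forall x, N x -> orb_deriv Gamma phi N Ld x (L x)).

End Defs.

(* Along an orbit the catenary equation integrates to L1 (phi t x) = Lplus e^t + Lminus e^-t,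
   with Lplus, Lminus >= 0: a negative coefficient would drive L1 to 0 in finite time, that is
   into Lam. So the orbit of a point of B \ Lam stays in B exactly for t between an entry and an
   exit time (either may be infinite), where it meets the boundary at L1 = delta, and a is
   constant there. The equation L2'' = a^2 L2 then has constant coefficients along the orbit,
   which forces L2 to be the combination of e^(a t) and e^(-a t) matching f at the ends (and
   bounded at an infinite end): this gives the explicit solution, its uniqueness (through the
   homogeneous problem) and its positivity. The explicit formula is continuous on B \ Lam
   because Lplus, Lminus, a and the exit points are; towards Lam the exit times blow up and,
   as a >= m > 0, the weights e^(-a t) of the boundary values tend to 0. *)

From Stdlib Require Import Reals List Lra Lia Classical ClassicalEpsilon.
From Coquelicot Require Import Coquelicot.
Open Scope R_scope.

(** * Real-variable facts *)

Lemma exp_le x y : x <= y -> exp x <= exp y.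
Proof. intros [H|H]. left; apply exp_increasing; auto. subst; lra. Qed.

Lemma ln_le x y : 0 < x -> x <= y -> ln x <= ln y.
Proof. intros H [H'|H']. left; apply ln_increasing; auto. subst; lra. Qed.

Lemma exp_opp_mul s : exp (- s) * exp s = 1.
Proof. rewrite <- exp_plus. replace (-s + s) with 0 by ring. apply exp_0. Qed.

Lemma quadratic_nonpos_between c dl e z1 z z2 : c >= 0 -> z1 <= z <= z2 ->
  c * z1 ^ 2 - dl * z1 + e <= 0 -> c * z2 ^ 2 - dl * z2 + e <= 0 ->
  c * z ^ 2 - dl * z + e <= 0.
Proof.
intros Hc [H1 H2] Q1 Q2.
destruct (Req_dec z1 z2) as [E|E]. subst. replace z with z2 by lra. auto.
assert (Iden : (c * z ^ 2 - dl * z + e) * (z2 - z1) =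
  (z2 - z) * (c * z1 ^ 2 - dl * z1 + e) + (z - z1) * (c * z2 ^ 2 - dl * z2 + e)
  - c * (z - z1) * (z2 - z) * (z2 - z1)) by ring.
assert (0 < z2 - z1) by lra.
assert (0 <= c * (z - z1) * (z2 - z) * (z2 - z1)).
{ repeat apply Rmult_le_pos; lra. }
assert (A : (c * z ^ 2 - dl * z + e) * (z2 - z1) <= 0).
{ rewrite Iden. assert (0 <= z2 - z) by lra. assert (0 <= z - z1) by lra.
  nra. }
nra.
Qed.

Lemma exp_combination_le p q s : p <= 0 -> 0 <= q -> 0 <= s -> p * exp s + q * exp (- s) <= p + q.
Proof.
intros Hp Hq Hs. pose proof (exp_le 0 s Hs). pose proof (exp_le (- s) 0 ltac:(lra)).
rewrite exp_0 in *. nra.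
Qed.

Lemma exp_combination_root p q : p < 0 -> p + q > 0 -> exists t, 0 < t /\ p * exp t + q * exp (- t) = 0.
Proof.
intros Hp Hpq. exists (ln (- q / p) / 2).
assert (Hr : 1 < - q / p).
{ apply Rmult_lt_reg_r with (- p); [lra|]. replace (- q / p * - p) with q by (field; lra). lra. }
split; [assert (0 < ln (- q / p)) by (rewrite <- ln_1; apply ln_increasing; lra); lra|].
set (t := ln (- q / p) / 2).
assert (E2 : exp t * exp t = - q / p).
{ rewrite <- exp_plus. replace (t + t) with (ln (- q / p)) by (unfold t; field). apply exp_ln. lra. }
apply Rmult_eq_reg_r with (exp t); [|pose proof (exp_pos t); lra].
rewrite Rmult_plus_distr_r, Rmult_assoc, E2, Rmult_assoc, exp_opp_mul. field. lra.
Qed.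

Lemma exp_combination_bounded al A Bc K : al > 0 ->
  (forall s, 0 <= s -> Rabs (A * exp (al * s) + Bc * exp (- al * s)) <= K) -> A = 0.
Proof.
intros Hal HK. apply Rabs_eq_0, Rle_antisym; [|apply Rabs_pos]. apply Rnot_lt_le; intros HA.
assert (K0 : 0 <= K) by (eapply Rle_trans; [apply Rabs_pos|apply (HK 0); lra]).
set (Z := (K + Rabs Bc) / Rabs A + 1).
assert (HZ : 1 <= Z) by (unfold Z; pose proof (Rabs_pos Bc);
  assert (0 <= (K + Rabs Bc) / Rabs A) by (apply Rdiv_le_0_compat; lra); lra).
set (s := ln Z / al).
assert (Hs : 0 <= s) by (unfold s; apply Rdiv_le_0_compat; [rewrite <- ln_1; apply ln_le|]; lra).
assert (Es : exp (al * s) = Z) by (unfold s; replace (al * (ln Z / al)) with (ln Z) by (field; lra); apply exp_ln; lra).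
assert (Em : exp (- al * s) <= 1) by (rewrite <- exp_0; apply exp_le; nra).
pose proof (exp_pos (- al * s)). specialize (HK s Hs).
assert (Tri : Rabs (A * exp (al * s)) <= K + Rabs (Bc * exp (- al * s))).
{ replace (A * exp (al * s)) with ((A * exp (al * s) + Bc * exp (- al * s)) - Bc * exp (- al * s)) at 1 by ring.
  eapply Rle_trans; [apply Rabs_triang|]. rewrite Rabs_Ropp. lra. }
rewrite !Rabs_mult, Es, (Rabs_right Z), (Rabs_right (exp _)) in Tri by lra.
assert (Rabs Bc * exp (- al * s) <= Rabs Bc) by (pose proof (Rabs_pos Bc); nra).
assert (Rabs A * Z = K + Rabs Bc + Rabs A) by (unfold Z; field; lra).
lra.
Qed.

Lemma exp_combination_two_zeros al A Bc t1 t2 : al > 0 -> t1 < t2 ->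
  A * exp (al * t1) + Bc * exp (- al * t1) = 0 ->
  A * exp (al * t2) + Bc * exp (- al * t2) = 0 -> A = 0 /\ Bc = 0.
Proof.
intros Hal Ht E1 E2.
assert (Sq : forall t, A * exp (al * t) + Bc * exp (- al * t) = 0 -> A * exp (al * t) ^ 2 + Bc = 0).
{ intros t E. transitivity ((A * exp (al * t) + Bc * exp (- al * t)) * exp (al * t)); [|rewrite E; ring].
  replace (- al * t) with (- (al * t)) by ring.
  rewrite <- (Rmult_1_r Bc) at 1. rewrite <- (exp_opp_mul (al * t)). ring. }
apply Sq in E1. apply Sq in E2.
assert (exp (al * t1) < exp (al * t2)) by (apply exp_increasing; nra).
pose proof (exp_pos (al * t1)).
assert (HA : A * (exp (al * t2) ^ 2 - exp (al * t1) ^ 2) = 0) by lra.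
apply Rmult_integral in HA as [HA|HA]; [split; [exact HA|subst; lra]|nra].
Qed.

Lemma one_sub_sq_prod p q : 0 <= p <= 1 -> 0 <= q <= 1 ->
  0 <= 1 - p ^ 2 * q ^ 2 /\ (1 - p ^ 2 * q ^ 2 = 0 -> p = 1 /\ q = 1).
Proof.
intros. assert (p * q <= 1) by nra. assert (0 <= p * q) by nra. split; [nra|].
intros. assert (p * q = 1) by nra. split; nra.
Qed.

Lemma bvp_weight_bounds p q : 0 <= p <= 1 -> 0 <= q <= 1 -> 1 - p ^ 2 * q ^ 2 <> 0 ->
  0 <= q * (1 - p ^ 2) / (1 - p ^ 2 * q ^ 2) <= q.
Proof.
intros Hp Hq Hd. destruct (one_sub_sq_prod p q Hp Hq) as [H0 _].
assert (D : 0 < 1 - p ^ 2 * q ^ 2) by lra.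
split.
- apply Rdiv_le_0_compat; [|lra]. apply Rmult_le_pos; nra.
- apply Rmult_le_reg_r with (1 - p ^ 2 * q ^ 2); auto.
  unfold Rdiv. rewrite Rmult_assoc, Rinv_l by lra.
  assert (q ^ 2 <= 1) by nra. assert (0 <= q * p ^ 2) by nra. nra.
Qed.

Lemma bvp_weight_sum p q : 0 <= p <= 1 -> 0 <= q <= 1 -> 1 - p ^ 2 * q ^ 2 <> 0 ->
  q * (1 - p ^ 2) / (1 - p ^ 2 * q ^ 2) + p * (1 - q ^ 2) / (1 - p ^ 2 * q ^ 2) = (p + q) / (1 + p * q).
Proof.
intros Hp Hq Hd. assert (0 <= p * q) by nra.
assert (1 + p * q <> 0) by lra.
field. split; auto. rewrite Rpow_mult_distr. exact Hd.
Qed.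

(* E ^ al with 0 ^ al = 0; Stdlib's Rpower 0 al is 1. *)
Definition rpow0 (E al : R) := if Rlt_dec 0 E then exp (al * ln E) else 0.

Lemma rpow0_range E al : 0 <= E <= 1 -> al > 0 -> 0 <= rpow0 E al <= 1.
Proof.
intros HE Hal. unfold rpow0. destruct Rlt_dec; [|lra].
split. left; apply exp_pos. rewrite <- exp_0. apply exp_le.
assert (ln E <= ln 1) by (apply ln_le; lra). rewrite ln_1 in H. nra.
Qed.

Lemma rpow0_pos E al : 0 < E -> rpow0 E al > 0.
Proof. intros H. unfold rpow0. destruct Rlt_dec; [apply exp_pos|lra]. Qed.

Lemma rpow0_0l al : rpow0 0 al = 0.
Proof. unfold rpow0. destruct Rlt_dec; lra. Qed.

Lemma rpow0_1l al : rpow0 1 al = 1.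
Proof. unfold rpow0. destruct Rlt_dec; [|lra]. rewrite ln_1, Rmult_0_r, exp_0. auto. Qed.

Lemma rpow0_eq1 E al : 0 <= E <= 1 -> al > 0 -> rpow0 E al = 1 -> E = 1.
Proof.
intros HE Hal H. unfold rpow0 in H. destruct Rlt_dec; [|lra].
rewrite <- exp_0 in H. apply exp_inv in H.
assert (ln E = 0). { apply Rmult_eq_reg_l with al. rewrite H; ring. lra. }
rewrite <- (exp_ln E) by auto. rewrite H0. apply exp_0.
Qed.

Lemma rpow0_mul_exp E al s : 0 <= E -> rpow0 (exp s * E) al = exp (al * s) * rpow0 E al.
Proof.
intros HE. unfold rpow0. pose proof (exp_pos s).
destruct (Rlt_dec 0 E) as [H1|H1]; destruct (Rlt_dec 0 (exp s * E)) as [H2|H2].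
- rewrite ln_mult, ln_exp by auto. rewrite <- exp_plus. f_equal. ring.
- exfalso; apply H2; apply Rmult_lt_0_compat; auto.
- exfalso. assert (E = 0) by lra. subst. lra.
- ring.
Qed.

Lemma rpow0_le_exp m E al : 0 < E <= 1 -> m <= al -> rpow0 E al <= exp (m * ln E).
Proof.
intros HE Hal. unfold rpow0. destruct Rlt_dec; [|lra]. apply exp_le.
assert (ln E <= ln 1) by (apply ln_le; lra). rewrite ln_1 in H. nra.
Qed.

Lemma rpow0_small m eps : m > 0 -> eps > 0 -> exists t, t > 0 /\ forall E al, 0 <= E < t -> E <= 1 -> m <= al -> rpow0 E al < eps.
Proof.
intros Hm He. exists (exp (ln eps / m)). split. apply exp_pos.
intros E al [E0 E1] E2 Hal. destruct (Rle_lt_or_eq_dec _ _ E0) as [Eplus'|Eplus'].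
2: { subst. rewrite rpow0_0l. auto. }
assert (rpow0 E al <= exp (m * ln E)) by (apply rpow0_le_exp; lra).
assert (exp (m * ln E) < eps).
{ replace eps with (exp (m * (ln eps / m))) by (replace (m * (ln eps / m)) with (ln eps) by (field; lra); apply exp_ln; auto).
  apply exp_increasing. apply Rmult_lt_compat_l; auto.
  rewrite <- (ln_exp (ln eps / m)). apply ln_increasing; auto. }
lra.
Qed.

Lemma list_upper_bound {I : Type} (g : I -> R) (l : list I) : exists M, forall i, In i l -> g i <= M.
Proof.
induction l as [|a l [M HM]]. exists 0. intros i [].
exists (Rmax (g a) M). intros i [E|Hi]. subst. apply Rmax_l.
eapply Rle_trans. apply HM; auto. apply Rmax_r.
Qed.

Lemma list_upper_bound_lt {I : Type} (g : I -> R) (S : R) (l : list I) :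
  (forall i, g i < S) -> exists M, M < S /\ forall i, In i l -> g i <= M.
Proof.
intros Hg. induction l as [|a0 l [M0 [HM0 HM]]].
- exists (S - 1). split. lra. intros i [].
- exists (Rmax (g a0) M0). split. apply Rmax_lub_lt; auto.
  intros i [E|Hi]. subst. apply Rmax_l. eapply Rle_trans. apply HM; auto. apply Rmax_r.
Qed.

Definition Rcont_at (h : R -> R) z0 :=
  forall eps, eps > 0 -> exists eta, eta > 0 /\ forall z, Rabs (z - z0) < eta -> Rabs (h z - h z0) < eps.

Definition Rcont2_at (op : R -> R -> R) p0 q0 :=
  forall eps, eps > 0 -> exists eta, eta > 0 /\ forall p q, Rabs (p - p0) < eta -> Rabs (q - q0) < eta ->
    Rabs (op p q - op p0 q0) < eps.

Lemma Rcont_at_of_derivable h z0 l : derivable_pt_lim h z0 l -> Rcont_at h z0.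
Proof.
intros H. assert (C : continuity_pt h z0) by (apply derivable_continuous_pt; exists l; exact H).
intros eps Heps. destruct (C eps Heps) as [eta [Heta Hh]].
exists eta; split; auto. intros r Hr.
destruct (Req_dec r z0) as [E|E]. subst. rewrite Rminus_diag, Rabs_R0. lra.
apply (Hh r). split. split. exact I. auto. exact Hr.
Qed.

Lemma Rcont2_at_plus p0 q0 : Rcont2_at Rplus p0 q0.
Proof.
intros eps Heps. exists (eps / 2). split. lra. intros p q Hp Hq.
replace (p + q - (p0 + q0)) with ((p - p0) + (q - q0)) by ring.
eapply Rle_lt_trans. apply Rabs_triang. lra.
Qed.

Lemma Rcont2_at_minus p0 q0 : Rcont2_at Rminus p0 q0.
Proof.
intros eps Heps. exists (eps / 2). split. lra. intros p q Hp Hq.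
replace (p - q - (p0 - q0)) with ((p - p0) - (q - q0)) by ring.
eapply Rle_lt_trans. apply Rabs_triang. rewrite Rabs_Ropp. lra.
Qed.

Lemma Rcont2_at_mult p0 q0 : Rcont2_at Rmult p0 q0.
Proof.
intros eps Heps. set (K := Rabs p0 + Rabs q0 + 2).
assert (HK : K > 0) by (unfold K; pose proof (Rabs_pos p0); pose proof (Rabs_pos q0); lra).
exists (Rmin 1 (eps / K)). split. apply Rmin_pos; [lra|apply Rdiv_lt_0_compat; lra].
intros p q Hp Hq. assert (Hm1 := Rmin_l 1 (eps / K)). assert (Hm2 := Rmin_r 1 (eps / K)).
replace (p * q - p0 * q0) with (p * (q - q0) + q0 * (p - p0)) by ring.
eapply Rle_lt_trans. apply Rabs_triang. rewrite !Rabs_mult.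
assert (Rabs p <= Rabs p0 + 1). { replace p with (p0 + (p - p0)) by ring. eapply Rle_trans. apply Rabs_triang. lra. }
pose proof (Rabs_pos p). pose proof (Rabs_pos q0).
assert (Rabs p * Rabs (q - q0) <= (Rabs p0 + 1) * Rmin 1 (eps / K)).
{ apply Rmult_le_compat; try lra. apply Rabs_pos. }
assert (Rabs q0 * Rabs (p - p0) <= Rabs q0 * Rmin 1 (eps / K)).
{ apply Rmult_le_compat_l; lra. }
assert ((Rabs p0 + 1 + Rabs q0) * Rmin 1 (eps / K) < eps).
{ assert ((Rabs p0 + 1 + Rabs q0) * Rmin 1 (eps / K) <= (Rabs p0 + 1 + Rabs q0) * (eps / K)).
  { apply Rmult_le_compat_l; lra. }
  assert ((Rabs p0 + 1 + Rabs q0) * (eps / K) < K * (eps / K)).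
  { apply Rmult_lt_compat_r. apply Rdiv_lt_0_compat; lra. unfold K; lra. }
  assert (K * (eps / K) = eps) by (field; lra). lra. }
lra.
Qed.

Lemma Rcont_at_inv z0 : z0 <> 0 -> Rcont_at Rinv z0.
Proof. intros H. apply Rcont_at_of_derivable with (- / z0 ^ 2). apply is_derive_Reals.
  apply (is_derive_ext (fun z => / z)). auto.
  auto_derive. auto. field. auto. Qed.

Lemma Rcont_at_exp z0 : Rcont_at exp z0.
Proof. apply Rcont_at_of_derivable with (exp z0). apply derivable_pt_lim_exp. Qed.

Lemma Rcont_at_ln z0 : z0 > 0 -> Rcont_at ln z0.
Proof. intros H. apply Rcont_at_of_derivable with (/ z0). apply derivable_pt_lim_ln. auto. Qed.

Lemma Rcont_at_sqrt z0 : 0 <= z0 -> Rcont_at sqrt z0.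
Proof.
intros H eps Heps. destruct (continuity_pt_sqrt z0 H eps Heps) as [e [He H']].
exists e. split; auto. intros z Hz. destruct (Req_dec z z0) as [E|E].
subst. rewrite Rminus_diag, Rabs_R0. auto.
apply (H' z). split. split. exact I. auto. exact Hz.
Qed.

Lemma Rcont_at_sqr z0 : Rcont_at (fun z => z ^ 2) z0.
Proof. apply Rcont_at_of_derivable with (2 * z0). apply is_derive_Reals. auto_derive; auto. ring. Qed.

Lemma continuous_induction (Q : R -> Prop) :
  (forall s, 0 <= s <= 1 -> (forall r, 0 <= r < s -> Q r) ->
     exists e, e > 0 /\ forall r, 0 <= r <= s + e -> r <= 1 -> Q r) ->
  forall r, 0 <= r <= 1 -> Q r.
Proof.
intros Hstep.
set (E := fun rho => 0 <= rho <= 1 /\ forall r, 0 <= r <= rho -> Q r).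
assert (Eb : bound E) by (exists 1; intros z [Hz _]; lra).
assert (Ene : exists z, E z).
{ destruct (Hstep 0) as [e [He H]]; [lra|intros; lra|].
  exists 0. split; [lra|]. intros r Hr. apply H; lra. }
destruct (completeness E Eb Ene) as [S [HS1 HS2]].
assert (S0 : 0 <= S) by (destruct Ene as [z Ez]; pose proof (HS1 z Ez); destruct Ez; lra).
assert (S1 : S <= 1) by (apply HS2; intros z [Hz _]; lra).
assert (Below : forall r, 0 <= r < S -> Q r).
{ intros r Hr. apply NNPP. intros Hn.
  assert (S <= r); [|lra]. apply HS2. intros z [Hz HQ]. apply Rnot_lt_le. intros Hzr.
  apply Hn, HQ. lra. }
destruct (Hstep S (conj S0 S1) Below) as [e [He H]].
assert (ES : E (Rmin 1 (S + e))).
{ split; [split; [apply Rmin_glb; lra|apply Rmin_l]|].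
  intros r Hr. apply H; pose proof (Rmin_l 1 (S + e)); pose proof (Rmin_r 1 (S + e)); lra. }
pose proof (HS1 _ ES) as Hle.
assert (S + e > 1) by (unfold Rmin in Hle; destruct Rle_dec in Hle; lra).
intros r Hr. apply H; lra.
Qed.

Lemma eq0_of_dense_zeros (h : R -> R) (I : R -> Prop) q :
  (forall eta, eta > 0 -> exists s, I s /\ Rabs (s - q) < eta /\ h s = 0) ->
  (forall eps, eps > 0 -> exists eta, eta > 0 /\
     forall s, I s -> Rabs (s - q) < eta -> Rabs (h s - h q) < eps) ->
  h q = 0.
Proof.
intros Hz Hc. apply Rabs_eq_0, Rle_antisym; [|apply Rabs_pos]. apply Rnot_lt_le; intros Hpos.
destruct (Hc _ Hpos) as [eta [Heta H]]. destruct (Hz eta Heta) as [s [Is [Hs Hs0]]].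
specialize (H s Is Hs). rewrite Hs0, Rminus_0_l, Rabs_Ropp in H. lra.
Qed.

Lemma eq_of_derivable_zero (h : R -> R) (p q : R) : p <= q ->
  (forall s, p < s < q -> derivable_pt_lim h s 0) ->
  (forall s, p <= s <= q -> forall eps, eps > 0 -> exists eta, eta > 0 /\
      forall r, p <= r <= q -> Rabs (r - s) < eta -> Rabs (h r - h s) < eps) ->
  h p = h q.
Proof.
intros Hpq Hd Hc.
destruct (Req_dec p q) as [E|Hne]; [subst; reflexivity|].
set (cl := fun s => Rmax p (Rmin q s)).
assert (Hcl : forall s, p <= s <= q -> cl s = s).
{ intros s Hs; unfold cl. rewrite Rmin_right by lra. rewrite Rmax_right; lra. }
assert (Hcl2 : forall s, p <= cl s <= q).
{ intros s; unfold cl. split. apply Rmax_l. apply Rmax_lub; [lra|apply Rmin_l]. }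
assert (Hlip : forall r s, Rabs (cl r - cl s) <= Rabs (r - s)).
{ intros r s; unfold cl. unfold Rmax, Rmin.
  repeat (destruct Rle_dec); repeat (destruct Rle_dec); unfold Rabs;
  repeat destruct Rcase_abs; lra. }
set (h' := fun s => h (cl s)).
destruct (MVT_gen h' p q (fun _ => 0)) as [c [_ Hc']].
- intros x Hx. rewrite Rmin_left in Hx by lra. rewrite Rmax_right in Hx by lra.
  apply is_derive_ext_loc with h.
  + assert (Hpos : 0 < Rmin (x - p) (q - x)) by (apply Rmin_pos; lra).
    exists (mkposreal _ Hpos).
    intros y Hy. unfold ball in Hy; simpl in Hy; unfold AbsRing_ball, abs, minus, plus, opp in Hy; simpl in Hy.
    unfold h'. rewrite Hcl; auto.
    apply Rabs_lt_between in Hy. destruct Hy as [Hy1 Hy2].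
    pose proof (Rmin_l (x - p) (q - x)). pose proof (Rmin_r (x - p) (q - x)). lra.
  + apply is_derive_Reals. apply Hd. auto.
- intros x Hx. rewrite Rmin_left in Hx by lra. rewrite Rmax_right in Hx by lra.
  unfold continuity_pt, continue_in, limit1_in, limit_in. simpl. unfold R_dist.
  intros eps Heps. destruct (Hc x Hx eps Heps) as [eta [Heta H]].
  exists eta. split; auto. intros y [_ Hy].
  unfold h'. rewrite (Hcl x Hx).
  apply H. apply Hcl2. pose proof (Hlip y x) as H0. rewrite (Hcl x Hx) in H0. lra.
- unfold h' in Hc'. rewrite !Hcl in Hc' by lra. lra.
Qed.

Lemma eq_of_derivable_zero_segment (h : R -> R) s :
  (forall r, Rmin 0 s <= r <= Rmax 0 s -> derivable_pt_lim h r 0) -> h s = h 0.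
Proof.
intros Hd. destruct (Rtotal_order s 0) as [Hlt|[->|Hgt]]; auto.
- destruct (MVT_cor2 h (fun _ => 0) s 0 Hlt) as [c [Hc _]]; [|simpl in Hc; lra].
  intros r Hr. apply Hd. rewrite Rmin_right, Rmax_left; lra.
- destruct (MVT_cor2 h (fun _ => 0) 0 s Hgt) as [c [Hc _]]; [|simpl in Hc; lra].
  intros r Hr. apply Hd. rewrite Rmin_left, Rmax_right; lra.
Qed.

Lemma is_derive_mul_exp (g : R -> R) c x l : is_derive g x l ->
  is_derive (fun s => g s * exp (c * s)) x ((l + c * g x) * exp (c * x)).
Proof.
intros H. evar_last. apply (is_derive_mult g (fun s => exp (c * s))); [exact H| |].
- auto_derive; auto.
- intros; apply Rmult_comm.
- simpl. unfold plus, mult; simpl. ring.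
Qed.

(* The combinations w' + c w and w' - c w evolve by the factors e^(c s) and e^(-c s). *)
Lemma exp_ode_solution (c : R) (w w' : R -> R) s : c <> 0 ->
  (forall r, Rmin 0 s <= r <= Rmax 0 s ->
     derivable_pt_lim w r (w' r) /\ derivable_pt_lim w' r (c ^ 2 * w r)) ->
  w s = (w' 0 + c * w 0) / (2 * c) * exp (c * s) - (w' 0 - c * w 0) / (2 * c) * exp (- c * s) /\
  w' s = (w' 0 + c * w 0) / 2 * exp (c * s) + (w' 0 - c * w 0) / 2 * exp (- c * s).
Proof.
intros Hc Hd.
assert (Hp : forall sg, sg = 1 \/ sg = -1 ->
  (w' s + sg * c * w s) * exp (- sg * c * s) = w' 0 + sg * c * w 0).
{ intros sg Hsg.
  transitivity ((w' 0 + sg * c * w 0) * exp (- sg * c * 0)); [|rewrite Rmult_0_r, exp_0; ring].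
  apply (eq_of_derivable_zero_segment (fun r => (w' r + sg * c * w r) * exp (- sg * c * r))).
  intros r Hr. destruct (Hd r Hr) as [D1 D2]. apply is_derive_Reals.
  evar_last. apply is_derive_mul_exp. apply (is_derive_plus w' (fun r => sg * c * w r)).
  - apply is_derive_Reals, D2.
  - apply is_derive_scal, is_derive_Reals, D1.
  - simpl. unfold plus; simpl. destruct Hsg as [-> | ->]; ring. }
pose proof (Hp 1 (or_introl eq_refl)) as E1. pose proof (Hp (-1) (or_intror eq_refl)) as E2.
replace (- -1 * c * s) with (c * s) in E2 by ring. replace (- (1) * c * s) with (- c * s) in E1 by ring.
assert (Ex : exp (c * s) * exp (- c * s) = 1) by (rewrite <- exp_plus, <- exp_0; f_equal; ring).
set (A := exp (c * s)) in *. set (B := exp (- c * s)) in *.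
assert (F1 : w' s + c * w s = (w' 0 + c * w 0) * A).
{ transitivity ((w' s + 1 * c * w s) * B * A); [rewrite Rmult_assoc, (Rmult_comm B), Ex; ring|].
  rewrite E1. ring. }
assert (F2 : w' s - c * w s = (w' 0 - c * w 0) * B).
{ transitivity ((w' s + -1 * c * w s) * A * B); [rewrite Rmult_assoc, Ex; ring|].
  rewrite E2. ring. }
split.
- apply Rmult_eq_reg_l with (2 * c); [|intro; apply Hc; lra].
  replace (2 * c * w s) with ((w' s + c * w s) - (w' s - c * w s)) by ring.
  rewrite F1, F2. field. exact Hc.
- replace (w' s) with (((w' s + c * w s) + (w' s - c * w s)) / 2) by field.
  rewrite F1, F2. field.
Qed.

(** * Metric spaces *)

Section MetricFacts.
Context {M : Metric_Space}.
Local Notation X := (Base M).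
Local Notation d := (dist M).

Lemma dist_self x : d x x = 0.
Proof. apply dist_refl. auto. Qed.

Lemma dist_triangle x y z : d x z <= d x y + d y z.
Proof. pose proof (dist_tri M x z y). auto. Qed.

Lemma dist_nonneg x y : 0 <= d x y.
Proof. pose proof (dist_pos M x y). lra. Qed.

Lemma m_interior_sub (S : X -> Prop) x : m_interior M S x -> S x.
Proof. intros [e [He H]]. apply H. rewrite dist_self. auto. Qed.

Lemma m_open_ball y e : m_open M (fun z => d z y < e).
Proof.
intros z Hz. exists (e - d z y). split. lra.
intros w Hw. pose proof (dist_triangle w z y). lra.
Qed.

Lemma compact_closed (K : X -> Prop) z : m_compact M K -> m_closure M K z -> K z.
Proof.
intros HK Hc. apply NNPP. intros Nz.
set (U := fun (n : nat) y => / INR (S n) < d y z).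
destruct (HK nat U) as [l Hl].
- intros n y Hy. exists (d y z - / INR (S n)). split. unfold U in Hy; lra.
  intros w Hw. unfold U in *. pose proof (dist_triangle y w z). rewrite (dist_sym M y w) in H. lra.
- intros y Ny. assert (Hyz : d y z > 0).
  { destruct (Rle_lt_or_eq_dec 0 (d y z) (dist_nonneg y z)) as [H|H]; auto.
    exfalso. symmetry in H. apply dist_refl in H. subst. auto. }
  destruct (archimed_cor1 (d y z) Hyz) as [n [Hn Hn0]].
  exists (pred n). unfold U. replace (S (pred n)) with n by lia. auto.
- destruct (list_upper_bound (fun n => INR (S n)) l) as [Kb HKb].
  set (K' := Rmax Kb 1). assert (HK1 := Rmax_r Kb 1). assert (HK2 := Rmax_l Kb 1).
  destruct (Hc (/ K')) as [y [Ny Hy]]. apply Rinv_0_lt_compat. unfold K'; lra.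
  destruct (Hl y Ny) as [n [Hin Hu]]. unfold U in Hu.
  assert (INR (S n) <= K') by (specialize (HKb n Hin); cbv beta in HKb; unfold K'; lra).
  assert (/ K' <= / INR (S n)). { apply Rinv_le_contravar; auto. apply lt_0_INR; lia. }
  lra.
Qed.

Lemma compact_bounded (C S : X -> Prop) (g : X -> R) : m_compact M C ->
  (forall y, S y -> C y) -> m_continuous_on M S g ->
  (forall y, C y -> ~ S y -> exists r, r > 0 /\ forall z, S z -> d z y >= r) ->
  exists K, forall y, S y -> Rabs (g y) <= K.
Proof.
intros HC HSC Hc Hsep.
set (P := fun p : X * R * R => snd (fst p) > 0 /\ forall z, S z -> d z (fst (fst p)) < snd (fst p) -> Rabs (g z) <= snd p).
set (I := sig P).
set (U := fun (i : I) z => d z (fst (fst (proj1_sig i))) < snd (fst (proj1_sig i))).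
destruct (HC I U) as [l Hl].
- intros i. apply m_open_ball.
- intros z Nz. destruct (classic (S z)) as [Sz|Sz].
  + destruct (Hc z Sz 1 ltac:(lra)) as [r [Hr H]].
    assert (Pz : P (z, r, Rabs (g z) + 1)).
    { split; simpl; auto. intros w Sw Hw. specialize (H w Sw Hw).
      pose proof (Rabs_triang_inv (g w) (g z)). lra. }
    exists (exist P _ Pz). unfold U; simpl. rewrite dist_self; auto.
  + destruct (Hsep z Nz Sz) as [r [Hr H]].
    assert (Pz : P (z, r, 0)).
    { split; simpl; auto. intros w Sw Hw. specialize (H w Sw). lra. }
    exists (exist P _ Pz). unfold U; simpl. rewrite dist_self; auto.
- destruct (list_upper_bound (fun i : I => snd (proj1_sig i)) l) as [K HK].
  exists K. intros y Sy. destruct (Hl y (HSC y Sy)) as [i [Hin Hu]].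
  specialize (HK i Hin). clear Hin. destruct i as [[[z r] k] [Hr H]]. simpl in *. unfold U in Hu; simpl in Hu.
  specialize (H y Sy Hu). lra.
Qed.

Definition m_cont_at (S : X -> Prop) (g : X -> R) (x0 : X) :=
  forall eps, eps > 0 -> exists r, r > 0 /\ forall y, S y -> d y x0 < r -> Rabs (g y - g x0) < eps.

Lemma m_cont_at_comp S g x0 h : m_cont_at S g x0 -> Rcont_at h (g x0) -> m_cont_at S (fun y => h (g y)) x0.
Proof.
intros Hg Hh eps Heps. destruct (Hh eps Heps) as [eta [Heta H]]. destruct (Hg eta Heta) as [r [Hr H']].
exists r. split; auto.
Qed.

Lemma m_cont_at_comp2 S g1 g2 x0 op : m_cont_at S g1 x0 -> m_cont_at S g2 x0 -> Rcont2_at op (g1 x0) (g2 x0) ->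
  m_cont_at S (fun y => op (g1 y) (g2 y)) x0.
Proof.
intros H1 H2 Hop eps Heps. destruct (Hop eps Heps) as [eta [Heta H]].
destruct (H1 eta Heta) as [r1 [Hr1 Kplus']]. destruct (H2 eta Heta) as [r2 [Hr2 Kminus']].
exists (Rmin r1 r2). split. apply Rmin_pos; auto. intros y Sy Hy.
assert (Hm1 := Rmin_l r1 r2). assert (Hm2 := Rmin_r r1 r2). apply H; [apply Kplus'|apply Kminus']; auto; lra.
Qed.

Lemma m_cont_at_const S c x0 : m_cont_at S (fun _ => c) x0.
Proof. intros eps Heps. exists 1. split. lra. intros. rewrite Rminus_diag, Rabs_R0. auto. Qed.

Lemma m_cont_at_ext S g g' x0 : m_cont_at S g x0 -> (exists r, r > 0 /\ forall y, S y -> d y x0 < r -> g y = g' y) ->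
  g x0 = g' x0 -> m_cont_at S g' x0.
Proof.
intros H [r [Hr He]] E0 eps Heps. destruct (H eps Heps) as [r' [Hr' H']].
exists (Rmin r r'). split. apply Rmin_pos; auto. intros y Sy Hy.
assert (Hm1 := Rmin_l r r'). assert (Hm2 := Rmin_r r r').
rewrite <- He, <- E0; auto; [|lra]. apply H'; auto. lra.
Qed.

Lemma m_cont_at_sub (S S' : X -> Prop) g x0 : (forall y, S' y -> S y) -> m_cont_at S g x0 -> m_cont_at S' g x0.
Proof. intros Hs H eps Heps. destruct (H eps Heps) as [r [Hr H']]. exists r. split; auto. Qed.

Lemma m_cont_at_plus S g1 g2 x0 : m_cont_at S g1 x0 -> m_cont_at S g2 x0 -> m_cont_at S (fun y => g1 y + g2 y) x0.
Proof. intros; apply (m_cont_at_comp2 S g1 g2 x0 Rplus); auto. apply Rcont2_at_plus. Qed.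

Lemma m_cont_at_minus S g1 g2 x0 : m_cont_at S g1 x0 -> m_cont_at S g2 x0 -> m_cont_at S (fun y => g1 y - g2 y) x0.
Proof. intros; apply (m_cont_at_comp2 S g1 g2 x0 Rminus); auto. apply Rcont2_at_minus. Qed.

Lemma m_cont_at_mult S g1 g2 x0 : m_cont_at S g1 x0 -> m_cont_at S g2 x0 -> m_cont_at S (fun y => g1 y * g2 y) x0.
Proof. intros; apply (m_cont_at_comp2 S g1 g2 x0 Rmult); auto. apply Rcont2_at_mult. Qed.

Lemma m_cont_at_div S g1 g2 x0 : m_cont_at S g1 x0 -> m_cont_at S g2 x0 -> g2 x0 <> 0 -> m_cont_at S (fun y => g1 y / g2 y) x0.
Proof.
intros H1 H2 Hn. unfold Rdiv. apply m_cont_at_mult; auto.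
apply (m_cont_at_comp S g2 x0 Rinv); auto. apply Rcont_at_inv; auto.
Qed.

Lemma m_cont_at_dominated S (T c : X -> R) K x0 : m_cont_at S c x0 -> c x0 = 0 -> T x0 = 0 -> K >= 0 ->
  (forall y, S y -> Rabs (T y) <= K * Rabs (c y)) -> m_cont_at S T x0.
Proof.
intros Hc Hc0 HT0 HK Hb eps Heps. destruct (Hc (eps / (K + 1))) as [r [Hr H]]. apply Rdiv_lt_0_compat; lra.
exists r. split; auto. intros y Sy Hy. specialize (H y Sy Hy). rewrite Hc0, Rminus_0_r in H.
rewrite HT0, Rminus_0_r. eapply Rle_lt_trans. apply Hb; auto.
assert (K * Rabs (c y) <= (K + 1) * Rabs (c y)) by (pose proof (Rabs_pos (c y)); nra).
assert ((K + 1) * Rabs (c y) < (K + 1) * (eps / (K + 1))) by (apply Rmult_lt_compat_l; lra).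
assert ((K + 1) * (eps / (K + 1)) = eps) by (field; lra). lra.
Qed.

Lemma rpow0_cont (S : X -> Prop) m (E al : X -> R) x0 : m > 0 ->
  m_cont_at S E x0 -> m_cont_at S al x0 -> (forall y, S y -> 0 <= E y <= 1 /\ m <= al y) ->
  S x0 -> m_cont_at S (fun y => rpow0 (E y) (al y)) x0.
Proof.
intros Hm CE Ca Hr H0. destruct (Hr x0 H0) as [[E0 E1] Ha0].
destruct (Rle_lt_or_eq_dec _ _ E0) as [Eplus'|Eplus'].
- destruct (CE (E x0 / 2)) as [r [Hrr HE]]. lra.
  apply m_cont_at_ext with (fun y => exp (al y * ln (E y))).
  + apply (m_cont_at_comp S (fun y => al y * ln (E y)) x0 exp). apply m_cont_at_mult; auto.
    apply (m_cont_at_comp S E x0 ln); auto. apply Rcont_at_ln; auto. apply Rcont_at_exp.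
  + exists r. split; auto. intros y Sy Hy. specialize (HE y Sy Hy). apply Rabs_lt_between in HE.
    unfold rpow0. destruct Rlt_dec; auto. lra.
  + unfold rpow0. destruct Rlt_dec; auto. lra.
- intros eps Heps. destruct (rpow0_small m eps Hm Heps) as [t [Ht Hs]].
  destruct (CE t Ht) as [r [Hrr HE]]. exists r. split; auto. intros y Sy Hy.
  specialize (HE y Sy Hy). rewrite <- Eplus'. rewrite rpow0_0l, Rminus_0_r. rewrite <- Eplus', Rminus_0_r in HE.
  destruct (Hr y Sy) as [[F0 F1] Fa]. rewrite Rabs_right in HE by lra.
  assert (0 <= rpow0 (E y) (al y)) by (unfold rpow0; destruct Rlt_dec; [left; apply exp_pos|lra]).
  rewrite Rabs_right by lra. apply Hs; auto.
Qed.

(* Otherwise every point of K has a ball that gam avoids just before S, and a finite subcover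
   leaves no room for gam near S. *)
Lemma compact_cluster (K : X -> Prop) (gam : R -> X) S : m_compact M K -> 0 < S ->
  (forall tau, 0 <= tau < S -> K (gam tau)) ->
  exists y, K y /\ forall eps, eps > 0 -> forall tau0, tau0 < S ->
    exists tau, tau0 < tau < S /\ 0 <= tau /\ d (gam tau) y < eps.
Proof.
intros HK Spos Hgam. apply NNPP. intros Hn.
set (P := fun p : X * R * R => K (fst (fst p)) /\ snd (fst p) > 0 /\ snd p < S /\
      forall tau, snd p < tau < S -> 0 <= tau -> d (gam tau) (fst (fst p)) >= snd (fst p)).
set (I := sig P).
set (U := fun (i : I) z => d z (fst (fst (proj1_sig i))) < snd (fst (proj1_sig i))).
destruct (HK I U) as [l Hl].
- intros i. apply m_open_ball.
- intros z Kz.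
  assert (Hz : exists e, e > 0 /\ exists tau0, tau0 < S /\
             forall tau, tau0 < tau < S -> 0 <= tau -> d (gam tau) z >= e).
  { apply NNPP. intros Hz. apply Hn. exists z. split; auto.
    intros eps Heps tau0 Ht0. apply NNPP. intros Hne. apply Hz. exists eps. split; auto.
    exists tau0. split; auto. intros tau Ht Ht'. apply Rnot_lt_ge. intros Hl'. apply Hne.
    exists tau. auto. }
  destruct Hz as [e [He [tau0 [Ht0 Hz]]]].
  assert (Pz : P (z, e, tau0)) by (unfold P; simpl; auto).
  exists (exist P (z, e, tau0) Pz). unfold U; simpl. rewrite dist_self. auto.
- destruct (list_upper_bound_lt (fun i : I => snd (proj1_sig i)) S l) as [M0 [HM0 HM]].
  { intros [p Hp]. simpl. apply Hp. }
  set (tau := (Rmax M0 0 + S) / 2).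
  pose proof (Rmax_l M0 0). pose proof (Rmax_r M0 0).
  assert (Rmax M0 0 < S) by (apply Rmax_lub_lt; auto).
  destruct (Hl _ (Hgam tau ltac:(unfold tau; lra))) as [i [Hin Hu]].
  destruct i as [[[y e] t0] [Ky [He [Ht0 Hy]]]]. unfold U in Hu; simpl in *.
  specialize (HM _ Hin). simpl in HM.
  assert (d (gam tau) y >= e) by (apply Hy; unfold tau; lra). lra.
Qed.

Variables (Gamma : R -> X -> Prop) (phi : R -> X -> X).

Lemma orb_deriv_of_derivable (D : X -> Prop) (g : X -> R) (F : R -> R) x l :
  (exists e, e > 0 /\ forall t, t <> 0 -> Rabs t < e -> Gamma t x -> D (phi t x) -> g (phi t x) = F t) ->
  g x = F 0 -> derivable_pt_lim F 0 l -> orb_deriv M Gamma phi D g x l.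
Proof.
intros [e [He HE]] H0 Hd eps Heps. destruct (Hd eps Heps) as [del Hdl].
exists (Rmin e del). split. apply Rmin_pos; auto. apply cond_pos.
intros t Ht0 Ht Gt Dt. assert (Hm1 := Rmin_l e del). assert (Hm2 := Rmin_r e del).
rewrite HE, H0; auto; [|lra]. specialize (Hdl t Ht0 ltac:(lra)). rewrite Rplus_0_l in Hdl. auto.
Qed.

Lemma orb_deriv_minus D g g' x l l' : orb_deriv M Gamma phi D g x l -> orb_deriv M Gamma phi D g' x l' ->
  orb_deriv M Gamma phi D (fun y => g y - g' y) x (l - l').
Proof.
intros H H' eps Heps.
destruct (H (eps / 2)) as [e [He Hg]]; [lra|]. destruct (H' (eps / 2)) as [e' [He' Hg']]; [lra|].
exists (Rmin e e'). split; [apply Rmin_pos; auto|].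
intros t Ht0 Ht Gt Dt. pose proof (Rmin_l e e'). pose proof (Rmin_r e e').
specialize (Hg t Ht0 ltac:(lra) Gt Dt). specialize (Hg' t Ht0 ltac:(lra) Gt Dt).
replace ((g (phi t x) - g' (phi t x) - (g x - g' x)) / t - (l - l'))
  with (((g (phi t x) - g x) / t - l) - ((g' (phi t x) - g' x) / t - l')) by (field; auto).
eapply Rle_lt_trans; [apply Rabs_triang|]. rewrite Rabs_Ropp. lra.
Qed.

End MetricFacts.

(** * Orbits through the sublevel set B *)

Section Catenary.
Variable M : Metric_Space.
Local Notation X := (Base M).
Local Notation d := (dist M).
Variables (Gamma : R -> X -> Prop) (phi : R -> X -> X) (Lam N : X -> Prop)
  (L1 Ld : X -> R) (delta : R) (a f : X -> R) (m : R).
Hypothesis Hflow : partial_flow M Gamma phi.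
Hypothesis Hinv : invariant M Gamma phi Lam.
Hypothesis HN_compact : m_compact M N.
Hypothesis HLam_int : forall x, Lam x -> m_interior M N x.
Hypothesis HL1_cont : m_continuous_on M N L1.
Hypothesis HL1_Lam : forall x, Lam x -> L1 x = 0.
Hypothesis HL1_pos : forall x, N x -> ~ Lam x -> L1 x > 0.
Hypothesis HL1_d : forall x, N x -> orb_deriv M Gamma phi N L1 x (Ld x).
Hypothesis HLd_d : forall x, N x -> orb_deriv M Gamma phi N Ld x (L1 x).
Hypothesis Hdelta : delta > 0.
Hypothesis HB_int : forall x, N x -> L1 x <= delta -> m_interior M N x.

Definition B x := N x /\ L1 x <= delta.
Definition BL x := B x /\ ~ Lam x.

Lemma flow_box x r : m_interior M N x -> r > 0 -> exists e, e > 0 /\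
  forall y t, d y x < e -> Rabs t < e ->
    Gamma t y /\ m_interior M N (phi t y) /\ d (phi t y) x < r.
Proof.
intros [e0 [He0 HN]] Hr.
destruct (pf_open _ _ _ Hflow 0 x (pf_zero_in _ _ _ Hflow x)) as [e1 [He1 Ho]].
destruct (pf_cont _ _ _ Hflow 0 x (pf_zero_in _ _ _ Hflow x) (Rmin r (e0/2))) as [e2 [He2 Hc]].
{ apply Rmin_pos; lra. }
exists (Rmin e1 e2). split. apply Rmin_pos; auto.
intros y t Hy Ht.
assert (Hm1 := Rmin_l e1 e2). assert (Hm2 := Rmin_r e1 e2).
assert (Gt : Gamma t y). { apply Ho. rewrite Rminus_0_r. lra. lra. }
assert (Hd : d (phi t y) (phi 0 x) < Rmin r (e0/2)).
{ apply Hc; auto. rewrite Rminus_0_r. lra. lra. }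
rewrite (pf_id _ _ _ Hflow) in Hd.
assert (Hm3 := Rmin_l r (e0/2)). assert (Hm4 := Rmin_r r (e0/2)).
split; auto. split; [|lra].
exists (e0/2). split. lra. intros z Hz. apply HN.
pose proof (dist_triangle z (phi t y) x). lra.
Qed.

Lemma Gamma_shift t s x : Gamma t x -> Gamma (s + t) x -> Gamma s (phi t x).
Proof. intros H1 H2. apply (pf_shift _ _ _ Hflow t x H1 s). auto. Qed.

Lemma phi_shift t s x : Gamma t x -> Gamma (s + t) x -> phi s (phi t x) = phi (s + t) x.
Proof. intros H1 H2. apply (pf_comp _ _ _ Hflow); auto. apply Gamma_shift; auto. Qed.

Lemma Lam_backward t x : Gamma t x -> Lam (phi t x) -> Lam x.
Proof.
intros Ht HL.
assert (G0 : Gamma (- t + t) x). { replace (-t + t) with 0 by ring. apply (pf_zero_in _ _ _ Hflow). }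
pose proof (Hinv (phi t x) (-t) HL (Gamma_shift t (-t) x Ht G0)) as H.
rewrite phi_shift in H; auto. replace (-t + t) with 0 in H by ring.
rewrite (pf_id _ _ _ Hflow) in H. auto.
Qed.

Lemma orbit_continuous x s0 : Gamma s0 x -> forall eps, eps > 0 -> exists eta, eta > 0 /\
  forall s, Gamma s x -> Rabs (s - s0) < eta -> d (phi s x) (phi s0 x) < eps.
Proof.
intros Hs eps He. destruct (pf_cont _ _ _ Hflow s0 x Hs eps He) as [e [He' H]].
exists e. split; auto. intros s Gs Hs'. apply H; auto. rewrite dist_self; auto.
Qed.

Definition int_at x t := Gamma t x /\ m_interior M N (phi t x).

Definition int_path x T := forall r, 0 <= r <= 1 -> int_at x (r * T).

Lemma int_at_0 x : m_interior M N x -> int_at x 0.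
Proof. intros Hx. split; [apply (pf_zero_in _ _ _ Hflow)|rewrite (pf_id _ _ _ Hflow); exact Hx]. Qed.

Lemma int_path_at x T s : int_path x T -> Rmin 0 T <= s <= Rmax 0 T -> int_at x s.
Proof.
intros HG Hs.
destruct (Req_dec T 0) as [E|E].
- subst. rewrite Rmin_left, Rmax_left in Hs by lra. replace s with (0 * 0) by lra. apply HG; lra.
- replace s with ((s / T) * T) by (field; auto). apply HG.
  unfold Rmin, Rmax in Hs. destruct Rle_dec in Hs.
  + assert (0 < T) by lra. split. apply Rdiv_le_0_compat; lra.
    apply Rmult_le_reg_r with T; auto. field_simplify; lra.
  + assert (T < 0) by lra. split.
    * unfold Rdiv. replace (s * / T) with ((- s) * / (- T)) by (field; auto).
      apply Rmult_le_pos; [lra|]. left; apply Rinv_0_lt_compat; lra.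
    * unfold Rdiv. replace (s * / T) with ((- s) * / (- T)) by (field; auto).
      apply Rmult_le_reg_r with (-T); [lra|]. field_simplify; lra.
Qed.

Lemma int_path_intro x T : (forall s, Rmin 0 T <= s <= Rmax 0 T -> int_at x s) -> int_path x T.
Proof.
intros H r Hr. apply H. unfold Rmin, Rmax. destruct Rle_dec; nra.
Qed.

Lemma orbit_derivable (D : X -> Prop) (g : X -> R) x t l : Gamma t x ->
  (exists eta, eta > 0 /\ forall h, Rabs h < eta -> Gamma (h + t) x /\ D (phi (h + t) x)) ->
  orb_deriv M Gamma phi D g (phi t x) l ->
  derivable_pt_lim (fun s => g (phi s x)) t l.
Proof.
intros Gt [eta [Heta Hn]] Hd eps Heps.
destruct (Hd eps Heps) as [del [Hdel' H]].
assert (Hp : 0 < Rmin del eta) by (apply Rmin_pos; auto).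
exists (mkposreal _ Hp). intros h Hh0 Hh. simpl in Hh.
assert (Hm1 := Rmin_l del eta). assert (Hm2 := Rmin_r del eta).
destruct (Hn h) as [Gh Dh]. lra.
rewrite Rplus_comm. rewrite <- phi_shift; auto.
apply H; auto. lra. apply Gamma_shift; auto. rewrite phi_shift; auto.
Qed.

Lemma orbit_derivable_int (g : X -> R) x t l : Gamma t x -> m_interior M N (phi t x) ->
  orb_deriv M Gamma phi N g (phi t x) l ->
  derivable_pt_lim (fun s => g (phi s x)) t l.
Proof.
intros Gt Hi Hd. apply orbit_derivable with N; auto.
destruct (flow_box (phi t x) 1 Hi ltac:(lra)) as [e [He H]].
exists e. split; auto. intros h Hh.
destruct (H (phi t x) h) as [G1 [I1 _]]; auto. rewrite dist_self; auto.
assert (Gamma (h + t) x). { apply (pf_shift _ _ _ Hflow t x Gt h). auto. }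
split; auto. rewrite <- phi_shift; auto. apply (m_interior_sub N); auto.
Qed.

Definition Lplus x := (L1 x + Ld x) / 2.
Definition Lminus x := (L1 x - Ld x) / 2.

Lemma L1_on_int_path x T : int_path x T ->
  L1 (phi T x) = Lplus x * exp T + Lminus x * exp (- T) /\
  Ld (phi T x) = Lplus x * exp T - Lminus x * exp (- T).
Proof.
intros HG.
destruct (exp_ode_solution 1 (fun s => L1 (phi s x)) (fun s => Ld (phi s x)) T) as [E1 E2]; [lra| |].
{ intros s Hs. destruct (int_path_at x T s HG Hs) as [Gs Is]. rewrite pow1, Rmult_1_l.
  split; apply orbit_derivable_int; auto; [apply HL1_d|apply HLd_d]; apply (m_interior_sub N); auto. }
rewrite (pf_id _ _ _ Hflow) in E1, E2. rewrite !Rmult_1_l in E1, E2.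
replace (- (1) * T) with (- T) in E1, E2 by ring.
unfold Lplus, Lminus. split; [rewrite E1|rewrite E2]; field.
Qed.

Lemma int_path_near_uniform x : m_interior M N x ->
  exists e, e > 0 /\ forall y t, d y x < e -> Rabs t < e -> int_path y t.
Proof.
intros Ix. destruct (flow_box x 1 Ix ltac:(lra)) as [e [He Hw]].
exists e. split; auto. intros y t Hy Ht. apply int_path_intro. intros s Hs.
destruct (Hw y s) as [G1 [I1 _]]; [auto| |split; auto].
unfold Rmin, Rmax in Hs; destruct Rle_dec in Hs; apply Rabs_lt_between; apply Rabs_lt_between in Ht; lra.
Qed.

Lemma int_path_near x : BL x -> exists e, e > 0 /\ forall t, Rabs t < e -> int_path x t.
Proof.
intros [[Nx Lx] _]. destruct (int_path_near_uniform x (HB_int x Nx Lx)) as [e [He Hw]].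
exists e. split; auto. intros t Ht. apply Hw; auto. rewrite dist_self; auto.
Qed.

Lemma int_path_cluster x T s : B x ->
  (forall r, 0 <= r <= 1 -> (forall r', 0 <= r' <= r -> int_at x (r' * T)) ->
     B (phi (r * T) x)) ->
  0 <= s <= 1 -> (forall r, 0 <= r < s -> int_at x (r * T)) ->
  exists y, B y /\ forall eps, eps > 0 -> exists tau, 0 <= tau <= s /\ s - eps < tau /\
    (forall r, 0 <= r <= tau -> int_at x (r * T)) /\
    d (phi (tau * T) x) y < eps.
Proof.
intros Bx HQB Hs Below.
destruct (Req_dec s 0) as [->|Hs0].
{ exists x. split; auto. intros eps Heps. exists 0. split; [lra|split; [lra|split]].
  - intros r Hr. replace (r * T) with 0 by (replace r with 0 by lra; ring).
    apply int_at_0, HB_int; apply Bx.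
  - rewrite Rmult_0_l, (pf_id _ _ _ Hflow), dist_self. auto. }
destruct (compact_cluster N (fun tau => phi (tau * T) x) s HN_compact) as [y [Ny Hy]]; [lra| |].
{ intros tau Ht. apply (m_interior_sub N), Below; lra. }
assert (Approx : forall eps, eps > 0 -> exists tau, 0 <= tau < s /\ s - eps < tau /\ d (phi (tau * T) x) y < eps).
{ intros eps Heps. destruct (Hy eps Heps (Rmax (s - eps) 0)) as [tau [Ht1 [Ht2 Ht3]]].
  - apply Rmax_lub_lt; lra.
  - exists tau. pose proof (Rmax_l (s - eps) 0). repeat split; lra. }
exists y. split.
- split; auto. apply Rnot_lt_le. intros Hlt.
  destruct (HL1_cont y Ny (L1 y - delta)) as [rho [Hrho Hc]]; [lra|].
  destruct (Approx rho Hrho) as [tau [Ht1 [_ Ht3]]].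
  destruct (HQB tau ltac:(lra) (fun r Hr => Below r ltac:(lra))) as [Nz Lz].
  specialize (Hc _ Nz Ht3). apply Rabs_lt_between in Hc. lra.
- intros eps Heps. destruct (Approx eps Heps) as [tau [Ht1 [Ht2 Ht3]]].
  exists tau. repeat split; try lra; auto; apply Below; lra.
Qed.

Lemma int_path_of_L1_bound x T : B x ->
  (forall s, Rmin 0 T <= s <= Rmax 0 T -> Lplus x * exp s + Lminus x * exp (- s) <= delta) ->
  int_path x T.
Proof.
intros Bx Hf.
destruct (Req_dec T 0) as [T0|T0].
{ subst. intros r Hr. rewrite Rmult_0_r. apply int_at_0, HB_int; apply Bx. }
assert (HQB : forall r, 0 <= r <= 1 ->
  (forall r', 0 <= r' <= r -> int_at x (r' * T)) -> B (phi (r * T) x)).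
{ intros tau Ht Hg.
  assert (HG : int_path x (tau * T)) by (intros r Hr; rewrite <- Rmult_assoc; apply Hg; nra).
  destruct (L1_on_int_path x _ HG) as [HL _].
  destruct (Hg tau) as [_ Hi]; [lra|].
  split; [apply (m_interior_sub N); auto|]. rewrite HL. apply Hf.
  unfold Rmin, Rmax; destruct Rle_dec; nra. }
unfold int_path. apply (continuous_induction (fun r => int_at x (r * T))).
intros s Hs Below.
destruct (int_path_cluster x T s Bx HQB Hs Below) as [y [By Hy]].
destruct (flow_box y 1 (HB_int y (proj1 By) (proj2 By)) ltac:(lra)) as [e [He Hw]].
assert (HT : Rabs T > 0) by (apply Rabs_pos_lt; auto).
set (c := e / Rabs T).
assert (Hc : c > 0) by (unfold c; apply Rdiv_lt_0_compat; lra).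
destruct (Hy (Rmin e (c / 2))) as [tau [Ht1 [Ht2 [Ht3 Ht4]]]]; [apply Rmin_pos; lra|].
pose proof (Rmin_l e (c / 2)). pose proof (Rmin_r e (c / 2)).
exists (tau + c / 2 - s). split; [lra|]. intros r Hr Hr1.
destruct (Rle_dec r tau) as [Hrt|Hrt]; [apply Ht3; lra|].
set (h := (r - tau) * T).
assert (Hh : Rabs h < e).
{ unfold h. rewrite Rabs_mult, (Rabs_right (r - tau)) by lra.
  assert ((r - tau) * Rabs T <= c / 2 * Rabs T) by (apply Rmult_le_compat_r; lra).
  assert (c / 2 * Rabs T = e / 2) by (unfold c; field; lra). lra. }
destruct (Ht3 tau) as [Gt _]; [lra|].
destruct (Hw (phi (tau * T) x) h) as [Gh [Ih _]]; [lra|auto|].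
assert (Eh : h + tau * T = r * T) by (unfold h; ring).
assert (Gr : Gamma (r * T) x) by (rewrite <- Eh; apply (pf_shift _ _ _ Hflow _ _ Gt); auto).
split; auto. rewrite <- Eh, <- phi_shift; auto. rewrite Eh; auto.
Qed.

Lemma L1_Lplus_Lminus x : L1 x = Lplus x + Lminus x.
Proof. unfold Lplus, Lminus. field. Qed.

Lemma L1_nonzero_on_path x t : BL x -> int_path x t -> L1 (phi t x) <> 0.
Proof.
intros [_ Lx] HG HL0.
destruct (int_path_at x t t HG) as [Gt It]; [unfold Rmin, Rmax; destruct Rle_dec; lra|].
destruct (classic (Lam (phi t x))) as [HL|HL].
- apply Lx. eapply Lam_backward; eauto.
- pose proof (HL1_pos _ (m_interior_sub N _ It) HL). lra.
Qed.

Lemma Lplus_Lminus_nonneg x : BL x -> 0 <= Lplus x /\ 0 <= Lminus x.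
Proof.
intros H. pose proof H as [[Nx Lx1] Lx].
assert (Hp : L1 x > 0) by (apply HL1_pos; auto). rewrite L1_Lplus_Lminus in Hp, Lx1.
split; apply Rnot_lt_le; intros Hneg.
- destruct (exp_combination_root (Lplus x) (Lminus x) Hneg Hp) as [t [Ht Ht0]].
  assert (HG : int_path x t).
  { apply int_path_of_L1_bound; [apply H|]. intros s Hs. rewrite Rmin_left, Rmax_right in Hs by lra.
    pose proof (exp_combination_le (Lplus x) (Lminus x) s). lra. }
  apply (L1_nonzero_on_path x t H HG). rewrite (proj1 (L1_on_int_path x t HG)). exact Ht0.
- destruct (exp_combination_root (Lminus x) (Lplus x) Hneg ltac:(lra)) as [t [Ht Ht0]].
  assert (HG : int_path x (- t)).
  { apply int_path_of_L1_bound; [apply H|]. intros s Hs. rewrite Rmin_right, Rmax_left in Hs by lra.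
    pose proof (exp_combination_le (Lminus x) (Lplus x) (- s)). rewrite Ropp_involutive in H0. lra. }
  apply (L1_nonzero_on_path x (- t) H HG). rewrite (proj1 (L1_on_int_path x (- t) HG)), Ropp_involutive. lra.
Qed.

Lemma B_on_segment x T : int_path x T -> (forall s, Rmin 0 T <= s <= Rmax 0 T -> Lplus x * exp s + Lminus x * exp (- s) <= delta) ->
  forall s, Rmin 0 T <= s <= Rmax 0 T -> B (phi s x).
Proof.
intros HG Hf s Hs.
assert (HGs : int_path x s). { apply int_path_intro. intros r Hr. apply (int_path_at x T r HG).
  unfold Rmin, Rmax in *. destruct (Rle_dec 0 T), (Rle_dec 0 s); lra. }
destruct (L1_on_int_path x s HGs) as [HL _]. destruct (int_path_at x T s HG Hs) as [_ Is].
split. apply (m_interior_sub N); auto. rewrite HL. apply Hf; auto.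
Qed.

Lemma BL_on_orbit x s : BL x -> Gamma s x -> B (phi s x) -> BL (phi s x).
Proof. intros [_ Lx] Gs Bs. split; auto. intros HL. apply Lx. eapply Lam_backward; eauto. Qed.

(* e^t_exit is the larger root z of Lplus z + Lminus / z = delta; Eplus = e^-t_exit is written
   so that it is 0, rather than undefined, when Lplus = 0 and the orbit never exits. *)
Definition disc_root x := sqrt (delta ^ 2 - 4 * Lplus x * Lminus x).
Definition Eplus x := 2 * Lplus x / (delta + disc_root x).
Definition Eminus x := 2 * Lminus x / (delta + disc_root x).

Lemma disc_nonneg x : BL x -> 0 <= delta ^ 2 - 4 * Lplus x * Lminus x.
Proof.
intros H. destruct (Lplus_Lminus_nonneg x H) as [Hu Hv]. destruct H as [[_ Hl] _]. rewrite L1_Lplus_Lminus in Hl.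
assert (0 <= (Lplus x - Lminus x) ^ 2) by apply pow2_ge_0.
assert ((Lplus x + Lminus x) * (Lplus x + Lminus x) <= delta * delta) by (apply Rmult_le_compat; lra).
simpl. lra.
Qed.

Lemma disc_root_spec x : BL x -> 0 <= disc_root x /\ disc_root x ^ 2 = delta ^ 2 - 4 * Lplus x * Lminus x.
Proof.
intros H. pose proof (disc_nonneg x H). unfold disc_root. split. apply sqrt_pos.
rewrite <- Rsqr_pow2. apply Rsqr_sqrt. auto.
Qed.

Lemma E_range x : BL x -> 0 <= Eplus x <= 1 /\ 0 <= Eminus x <= 1.
Proof.
intros H. destruct (Lplus_Lminus_nonneg x H) as [Hu Hv]. destruct (disc_root_spec x H) as [HD1 HD2].
pose proof H as [[_ Hl] _]. rewrite L1_Lplus_Lminus in Hl.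
unfold Eplus, Eminus. assert (Hpos : 0 < delta + disc_root x) by lra.
split; split.
- apply Rdiv_le_0_compat; lra.
- apply Rmult_le_reg_r with (delta + disc_root x); auto. unfold Rdiv. rewrite Rmult_assoc, Rinv_l by lra.
  rewrite Rmult_1_r, Rmult_1_l. destruct (Rle_dec (2 * Lplus x) delta). lra. nra.
- apply Rdiv_le_0_compat; lra.
- apply Rmult_le_reg_r with (delta + disc_root x); auto. unfold Rdiv. rewrite Rmult_assoc, Rinv_l by lra.
  rewrite Rmult_1_r, Rmult_1_l. destruct (Rle_dec (2 * Lminus x) delta). lra. nra.
Qed.

Definition t_exit x := - ln (Eplus x).
Definition t_entry x := ln (Eminus x).
Definition exit_pt x := phi (t_exit x) x.
Definition entry_pt x := phi (t_entry x) x.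

Lemma exit_spec x : BL x -> Lplus x > 0 ->
  0 <= t_exit x /\ int_path x (t_exit x) /\ (forall s, 0 <= s <= t_exit x -> B (phi s x)) /\ L1 (exit_pt x) = delta.
Proof.
intros H Hu. destruct (Lplus_Lminus_nonneg x H) as [_ Hv]. destruct (disc_root_spec x H) as [HD1 HD2].
destruct (E_range x H) as [[E1 E2] _].
pose proof H as [Bx _]. pose proof Bx as [_ Hl]. rewrite L1_Lplus_Lminus in Hl.
assert (Ep0 : 0 < Eplus x). { unfold Eplus. apply Rdiv_lt_0_compat; lra. }
assert (Htp : 0 <= t_exit x). { unfold t_exit. assert (ln (Eplus x) <= ln 1) by (apply ln_le; lra). rewrite ln_1 in H0. lra. }
assert (EZ : exp (t_exit x) = (delta + disc_root x) / (2 * Lplus x)).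
{ unfold t_exit. rewrite exp_Ropp, exp_ln by auto. unfold Eplus. field. lra. }
set (Z := (delta + disc_root x) / (2 * Lplus x)).
assert (QZ : Lplus x * Z ^ 2 - delta * Z + Lminus x = 0). { unfold Z. field_simplify. 2: lra.
  replace (disc_root x ^ 2) with (delta ^ 2 - 4 * Lplus x * Lminus x). field. lra. }
assert (Hform : forall s, 0 <= s <= t_exit x -> Lplus x * exp s + Lminus x * exp (- s) <= delta).
{ intros s Hs. set (z := exp s). assert (Hz : 1 <= z <= Z).
  { unfold z. split. rewrite <- exp_0. apply exp_le; lra. fold Z in EZ. rewrite <- EZ. apply exp_le; lra. }
  assert (Q : Lplus x * z ^ 2 - delta * z + Lminus x <= 0).
  { apply quadratic_nonpos_between with 1 Z; lra. }
  rewrite exp_Ropp. fold z. apply Rmult_le_reg_r with z. lra.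
  replace ((Lplus x * z + Lminus x * / z) * z) with (Lplus x * z ^ 2 + Lminus x) by (field; lra). lra. }
assert (HG : int_path x (t_exit x)). { apply int_path_of_L1_bound; auto. intros s Hs. apply Hform. unfold Rmin, Rmax in Hs; destruct Rle_dec in Hs; lra. }
split; auto. split; auto. split.
- intros s Hs. apply (B_on_segment x (t_exit x) HG). intros r Hr. apply Hform. unfold Rmin, Rmax in Hr; destruct Rle_dec in Hr; lra.
  unfold Rmin, Rmax; destruct Rle_dec; lra.
- unfold exit_pt. destruct (L1_on_int_path x _ HG) as [HL _]. rewrite HL. rewrite exp_Ropp. fold Z in EZ. rewrite EZ.
  assert (Z > 0) by (unfold Z; apply Rdiv_lt_0_compat; lra).
  apply Rmult_eq_reg_r with Z; [|lra].
  replace ((Lplus x * Z + Lminus x * / Z) * Z) with (Lplus x * Z ^ 2 + Lminus x) by (field; lra). lra.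
Qed.

Lemma entry_spec x : BL x -> Lminus x > 0 ->
  t_entry x <= 0 /\ int_path x (t_entry x) /\ (forall s, t_entry x <= s <= 0 -> B (phi s x)) /\ L1 (entry_pt x) = delta.
Proof.
intros H Hv. destruct (Lplus_Lminus_nonneg x H) as [Hu _]. destruct (disc_root_spec x H) as [HD1 HD2].
destruct (E_range x H) as [_ [E1 E2]].
pose proof H as [Bx _]. pose proof Bx as [_ Hl]. rewrite L1_Lplus_Lminus in Hl.
assert (Em0 : 0 < Eminus x). { unfold Eminus. apply Rdiv_lt_0_compat; lra. }
assert (Htm : t_entry x <= 0). { unfold t_entry. assert (ln (Eminus x) <= ln 1) by (apply ln_le; lra). rewrite ln_1 in H0. lra. }
assert (EZ : exp (- t_entry x) = (delta + disc_root x) / (2 * Lminus x)).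
{ unfold t_entry. rewrite exp_Ropp, exp_ln by auto. unfold Eminus. field. lra. }
set (Z := (delta + disc_root x) / (2 * Lminus x)).
assert (QZ : Lminus x * Z ^ 2 - delta * Z + Lplus x = 0). { unfold Z. field_simplify. 2: lra.
  replace (disc_root x ^ 2) with (delta ^ 2 - 4 * Lplus x * Lminus x). field. lra. }
assert (Hform : forall s, t_entry x <= s <= 0 -> Lplus x * exp s + Lminus x * exp (- s) <= delta).
{ intros s Hs. set (z := exp (- s)). assert (Hz : 1 <= z <= Z).
  { unfold z. split. rewrite <- exp_0. apply exp_le; lra. fold Z in EZ. rewrite <- EZ. apply exp_le; lra. }
  assert (Q : Lminus x * z ^ 2 - delta * z + Lplus x <= 0).
  { apply quadratic_nonpos_between with 1 Z; lra. }
  replace (exp s) with (/ z) by (unfold z; rewrite exp_Ropp, Rinv_inv; auto).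
  apply Rmult_le_reg_r with z. lra.
  replace ((Lplus x * / z + Lminus x * z) * z) with (Lminus x * z ^ 2 + Lplus x) by (field; lra). lra. }
assert (HG : int_path x (t_entry x)). { apply int_path_of_L1_bound; auto. intros s Hs. apply Hform. unfold Rmin, Rmax in Hs; destruct Rle_dec in Hs; lra. }
split; auto. split; auto. split.
- intros s Hs. apply (B_on_segment x (t_entry x) HG). intros r Hr. apply Hform. unfold Rmin, Rmax in Hr; destruct Rle_dec in Hr; lra.
  unfold Rmin, Rmax; destruct Rle_dec; lra.
- unfold entry_pt. destruct (L1_on_int_path x _ HG) as [HL _]. rewrite HL. fold Z in EZ. rewrite EZ.
  assert (Z > 0) by (unfold Z; apply Rdiv_lt_0_compat; lra).
  replace (exp (t_entry x)) with (/ Z) by (rewrite <- EZ, exp_Ropp, Rinv_inv; auto).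
  apply Rmult_eq_reg_r with Z; [|lra].
  replace ((Lplus x * / Z + Lminus x * Z) * Z) with (Lminus x * Z ^ 2 + Lplus x) by (field; lra). lra.
Qed.

Lemma forward_in_B x : BL x -> Lplus x = 0 -> forall t, 0 <= t -> int_path x t /\ forall s, 0 <= s <= t -> B (phi s x).
Proof.
intros H Hu t Ht. destruct (Lplus_Lminus_nonneg x H) as [_ Hv]. pose proof H as [Bx _]. pose proof Bx as [_ Hl]. rewrite L1_Lplus_Lminus in Hl.
assert (Hform : forall s, Rmin 0 t <= s <= Rmax 0 t -> Lplus x * exp s + Lminus x * exp (- s) <= delta).
{ intros s Hs. rewrite Rmin_left, Rmax_right in Hs by lra. rewrite Hu.
  assert (exp (-s) <= 1) by (rewrite <- exp_0; apply exp_le; lra). nra. }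
assert (HG : int_path x t) by (apply int_path_of_L1_bound; auto).
split; auto. intros s Hs. apply (B_on_segment x t HG Hform). rewrite Rmin_left, Rmax_right; lra.
Qed.

Lemma backward_in_B x : BL x -> Lminus x = 0 -> forall t, t <= 0 -> int_path x t /\ forall s, t <= s <= 0 -> B (phi s x).
Proof.
intros H Hv t Ht. destruct (Lplus_Lminus_nonneg x H) as [Hu _]. pose proof H as [Bx _]. pose proof Bx as [_ Hl]. rewrite L1_Lplus_Lminus in Hl.
assert (Hform : forall s, Rmin 0 t <= s <= Rmax 0 t -> Lplus x * exp s + Lminus x * exp (- s) <= delta).
{ intros s Hs. rewrite Rmin_right, Rmax_left in Hs by lra. rewrite Hv.
  assert (exp s <= 1) by (rewrite <- exp_0; apply exp_le; lra). nra. }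
assert (HG : int_path x t) by (apply int_path_of_L1_bound; auto).
split; auto. intros s Hs. apply (B_on_segment x t HG Hform). rewrite Rmin_right, Rmax_left; lra.
Qed.

Lemma boundary_B_inv z : m_boundary M B z -> BL z /\ L1 z = delta.
Proof.
intros [Hcl Hni].
assert (Nz : N z). { apply (compact_closed N z HN_compact). intros e He. destruct (Hcl e He) as [y [[Ny _] Hy]]. eauto. }
assert (Lz : L1 z <= delta).
{ apply Rnot_lt_le. intros Hlt. destruct (HL1_cont z Nz (L1 z - delta)) as [r [Hr Hc]]. lra.
  destruct (Hcl r Hr) as [y [[Ny Ly] Hy]]. specialize (Hc y Ny Hy). apply Rabs_lt_between in Hc. lra. }
assert (Lz2 : L1 z = delta).
{ destruct (Rle_lt_or_eq_dec _ _ Lz) as [Hlt|]; auto. exfalso. apply Hni.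
  destruct (HB_int z Nz Lz) as [e0 [He0 HN]].
  destruct (HL1_cont z Nz (delta - L1 z)) as [r [Hr Hc]]. lra.
  exists (Rmin e0 r). split. apply Rmin_pos; auto. intros y Hy.
  assert (Hm1 := Rmin_l e0 r). assert (Hm2 := Rmin_r e0 r).
  assert (Ny : N y) by (apply HN; lra). split; auto.
  specialize (Hc y Ny ltac:(lra)). apply Rabs_lt_between in Hc. lra. }
split; auto. split. split; auto. intros HL. rewrite HL1_Lam in Lz2; auto. lra.
Qed.

Lemma boundary_B_intro z : BL z -> L1 z = delta -> m_boundary M B z.
Proof.
intros Hz Lz. split.
- intros e He. exists z. split. apply Hz. rewrite dist_self; auto.
- intros [e [He Hi]].
  destruct (Lplus_Lminus_nonneg z Hz) as [Hu Hv]. pose proof Hz as [[Nz _] _].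
  destruct (flow_box z e (HB_int z Nz ltac:(lra)) He) as [e1 [He1 Hw]].
  set (t := if Rle_dec (Lminus z) (Lplus z) then e1 / 2 else - (e1 / 2)).
  assert (Ht : Rabs t < e1). { unfold t. destruct Rle_dec. rewrite Rabs_right; lra. rewrite Rabs_Ropp, Rabs_right; lra. }
  assert (HG : int_path z t). { apply int_path_intro. intros s Hs. destruct (Hw z s) as [G1 [I1 _]].
    rewrite dist_self; auto. unfold Rmin, Rmax in Hs. destruct Rle_dec in Hs; apply Rabs_lt_between; apply Rabs_lt_between in Ht; lra. split; auto. }
  destruct (Hw z t) as [_ [_ Hd]]. rewrite dist_self; auto. auto.
  destruct (Hi _ Hd) as [_ Hle]. destruct (L1_on_int_path z t HG) as [HL _]. rewrite HL in Hle.
  rewrite L1_Lplus_Lminus in Lz.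
  pose proof (exp_opp_mul t) as Hinvt.
  unfold t in *. destruct Rle_dec.
  + assert (exp (e1/2) > 1) by (rewrite <- exp_0; apply exp_increasing; lra).
    set (p := exp (e1/2)) in *. assert (Hp : exp (- (e1/2)) = / p) by (unfold p; rewrite exp_Ropp; auto).
    rewrite Hp in Hle. assert (Lplus z > 0) by lra.
    assert (Lplus z * p + Lminus z * / p > Lplus z + Lminus z).
    { apply Rmult_lt_reg_r with p. lra. replace ((Lplus z * p + Lminus z * / p) * p) with (Lplus z * p * p + Lminus z) by (field; lra).
      clearbody p. assert (Lplus z * p - Lminus z > 0) by nra. nra. }
    lra.
  + assert (exp (e1/2) > 1) by (rewrite <- exp_0; apply exp_increasing; lra).
    set (p := exp (e1/2)) in *. assert (Hp : exp (- (e1/2)) = / p) by (unfold p; rewrite exp_Ropp; auto).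
    rewrite Ropp_involutive in Hle. rewrite Hp in Hle. fold p in Hle. assert (Lminus z > 0) by lra.
    assert (Lplus z * / p + Lminus z * p > Lplus z + Lminus z).
    { apply Rmult_lt_reg_r with p. lra. replace ((Lplus z * / p + Lminus z * p) * p) with (Lminus z * p * p + Lplus z) by (field; lra).
      clearbody p. assert (Lminus z * p - Lplus z > 0) by nra. nra. }
    lra.
Qed.

Lemma B_separated y : N y -> ~ B y -> exists r, r > 0 /\ forall z, B z -> d z y >= r.
Proof.
intros Ny Hn. assert (Hl : L1 y > delta) by (apply Rnot_le_lt; intros H; apply Hn; split; auto).
destruct (HL1_cont y Ny (L1 y - delta)) as [r [Hr H]]. lra.
exists r. split; auto. intros z [Nz Lz]. apply Rnot_lt_ge. intros Hd.
specialize (H z Nz Hd). apply Rabs_lt_between in H. lra.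
Qed.

Lemma B_bounded g : m_continuous_on M B g -> exists K, forall y, B y -> Rabs (g y) <= K.
Proof.
intros Hc. apply (compact_bounded N); auto. intros y [Ny _]; auto. apply B_separated.
Qed.

Lemma boundary_bounded g : m_continuous_on M (m_boundary M B) g ->
  exists K, forall y, m_boundary M B y -> Rabs (g y) <= K.
Proof.
intros Hc. apply (compact_bounded N); auto.
- intros y Hy. destruct (boundary_B_inv y Hy) as [[[Ny _] _] _]; auto.
- intros y Ny Hn. destruct (classic (B y)) as [By|By].
  + assert (Hi : m_interior M B y).
    { apply NNPP. intros Hi. apply Hn. split; auto. intros e He. exists y. split; auto. rewrite dist_self; auto. }
    destruct Hi as [e [He Hi]]. exists (e / 2). split. lra.
    intros z [_ Hz]. apply Rnot_lt_ge. intros Hd. apply Hz. exists (e / 2). split. lra.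
    intros w Hw. apply Hi. pose proof (dist_triangle w z y). lra.
  + destruct (B_separated y Ny By) as [r [Hr H]]. exists r. split; auto.
    intros z Hz. apply H. destruct (boundary_B_inv z Hz) as [[Bz _] _]; auto.
Qed.

Hypothesis Ha_pos : forall x, BL x -> a x > 0.
Hypothesis Ha_cont : m_continuous_on M BL a.
Hypothesis Ha_d : forall x, BL x -> orb_deriv M Gamma phi BL a x 0.
Hypothesis Hm : m > 0.
Hypothesis Hma : forall x, BL x -> m <= a x.
Hypothesis Hf_cont : m_continuous_on M (m_boundary M B) f.

Lemma L1_bound_quadratic x s : Lplus x * exp s + Lminus x * exp (- s) <= delta <-> Lplus x * (exp s) ^ 2 - delta * exp s + Lminus x <= 0.
Proof.
pose proof (exp_pos s). rewrite exp_Ropp.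
assert (E : (Lplus x * exp s + Lminus x * / exp s) * exp s = Lplus x * (exp s) ^ 2 + Lminus x) by (field; lra).
split; intros H'.
- assert ((Lplus x * exp s + Lminus x * / exp s) * exp s <= delta * exp s) by (apply Rmult_le_compat_r; lra). lra.
- apply Rmult_le_reg_r with (exp s); auto. lra.
Qed.

Lemma B_segment_convex x t : BL x -> int_path x t -> B (phi t x) -> forall s, Rmin 0 t <= s <= Rmax 0 t -> B (phi s x).
Proof.
intros H HG Bt. apply (B_on_segment x t HG).
destruct (Lplus_Lminus_nonneg x H) as [Hu Hv].
assert (Q0 : Lplus x * (exp 0) ^ 2 - delta * exp 0 + Lminus x <= 0).
{ rewrite exp_0. destruct H as [[_ Hl] _]. rewrite L1_Lplus_Lminus in Hl. lra. }
assert (Qt : Lplus x * (exp t) ^ 2 - delta * exp t + Lminus x <= 0).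
{ apply L1_bound_quadratic. destruct (L1_on_int_path x t HG) as [HL _]. rewrite <- HL. apply Bt. }
intros s Hs. apply L1_bound_quadratic. unfold Rmin, Rmax in Hs. destruct Rle_dec in Hs.
- apply quadratic_nonpos_between with (exp 0) (exp t); auto; lra || (split; apply exp_le; lra).
- apply quadratic_nonpos_between with (exp t) (exp 0); auto; lra || (split; apply exp_le; lra).
Qed.

Lemma a_const_on_orbit x T : BL x -> int_path x T -> B (phi T x) -> a (phi T x) = a x.
Proof.
intros H HG BT.
assert (Hseg := B_segment_convex x T H HG BT).
set (p := Rmin 0 T). set (q := Rmax 0 T).
assert (Hpq : p <= q) by (unfold p, q, Rmin, Rmax; destruct Rle_dec; lra).
assert (BLs : forall s, p <= s <= q -> Gamma s x /\ BL (phi s x)).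
{ intros s Hs. destruct (int_path_at x T s HG Hs) as [Gs _]. split; auto. apply BL_on_orbit; auto. }
assert (E := eq_of_derivable_zero (fun s => a (phi s x)) p q Hpq).
assert (Hpq' : a (phi p x) = a (phi q x)).
{ apply E.
  - intros s Hs. destruct (BLs s ltac:(lra)) as [Gs BLs'].
    apply orbit_derivable with BL; auto.
    + exists (Rmin (s - p) (q - s)). split. apply Rmin_pos; lra.
      intros h Hh. assert (Hm1 := Rmin_l (s - p) (q - s)). assert (Hm2 := Rmin_r (s - p) (q - s)).
      apply Rabs_lt_between in Hh. apply BLs. lra.
  - intros s Hs eps Heps. destruct (BLs s Hs) as [Gs BLs'].
    destruct (Ha_cont _ BLs' eps Heps) as [r [Hr Hc]].
    destruct (orbit_continuous x s Gs r Hr) as [eta [Heta Ho]].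
    exists eta. split; auto. intros r' Hr' Hd. destruct (BLs r' Hr') as [Gr BLr].
    apply Hc; auto. }
unfold p, q, Rmin, Rmax in Hpq'. destruct Rle_dec in Hpq'; rewrite (pf_id _ _ _ Hflow) in Hpq'; auto.
Qed.

Lemma orbit_transport x t : BL x -> int_path x t -> B (phi t x) ->
  BL (phi t x) /\ Lplus (phi t x) = exp t * Lplus x /\ Lminus (phi t x) = exp (- t) * Lminus x /\
  a (phi t x) = a x /\ disc_root (phi t x) = disc_root x /\ Eplus (phi t x) = exp t * Eplus x /\ Eminus (phi t x) = exp (- t) * Eminus x.
Proof.
intros H HG Bt.
destruct (int_path_at x t t HG) as [Gt _]. unfold Rmin, Rmax; destruct Rle_dec; lra.
destruct (L1_on_int_path x t HG) as [E1 E2].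
assert (Eu : Lplus (phi t x) = exp t * Lplus x) by (change (Lplus (phi t x)) with ((L1 (phi t x) + Ld (phi t x)) / 2); rewrite E1, E2; field).
assert (Ev : Lminus (phi t x) = exp (- t) * Lminus x) by (change (Lminus (phi t x)) with ((L1 (phi t x) - Ld (phi t x)) / 2); rewrite E1, E2; field).
pose proof (exp_opp_mul t) as Hi.
assert (ED : disc_root (phi t x) = disc_root x).
{ unfold disc_root. rewrite Eu, Ev. f_equal. replace (4 * (exp t * Lplus x) * (exp (- t) * Lminus x)) with (4 * Lplus x * Lminus x * (exp (-t) * exp t)) by ring.
  rewrite Hi. ring. }
split. apply BL_on_orbit; auto. split; auto. split; auto. split. apply a_const_on_orbit; auto.
split; auto. split.
- unfold Eplus. rewrite ED, Eu. unfold Rdiv. ring.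
- unfold Eminus. rewrite ED, Ev. unfold Rdiv. ring.
Qed.

Lemma entry_pt_invariant x t : BL x -> Lminus x > 0 -> int_path x t -> B (phi t x) -> entry_pt (phi t x) = entry_pt x.
Proof.
intros H Hv HG Bt. destruct (orbit_transport x t H HG Bt) as [_ [_ [_ [_ [_ [_ HEm]]]]]].
destruct (entry_spec x H Hv) as [Htm [HGm _]].
destruct (int_path_at x _ (t_entry x) HGm) as [Gm _]. unfold Rmin, Rmax; destruct Rle_dec; lra.
destruct (int_path_at x t t HG) as [Gt _]. unfold Rmin, Rmax; destruct Rle_dec; lra.
destruct (E_range x H) as [_ [E1 E2]].
assert (Em0 : 0 < Eminus x). { unfold Eminus. destruct (disc_root_spec x H). apply Rdiv_lt_0_compat; lra. }
assert (Et : t_entry (phi t x) = - t + t_entry x).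
{ unfold t_entry. rewrite HEm. rewrite ln_mult. rewrite ln_exp. auto. apply exp_pos. auto. }
unfold entry_pt. rewrite Et. rewrite phi_shift; auto. f_equal. ring. replace (- t + t_entry x + t) with (t_entry x) by ring. auto.
Qed.

Lemma exit_pt_invariant x t : BL x -> Lplus x > 0 -> int_path x t -> B (phi t x) -> exit_pt (phi t x) = exit_pt x.
Proof.
intros H Hu HG Bt. destruct (orbit_transport x t H HG Bt) as [_ [_ [_ [_ [_ [HEp _]]]]]].
destruct (exit_spec x H Hu) as [Htp [HGp _]].
destruct (int_path_at x _ (t_exit x) HGp) as [Gp _]. unfold Rmin, Rmax; destruct Rle_dec; lra.
destruct (int_path_at x t t HG) as [Gt _]. unfold Rmin, Rmax; destruct Rle_dec; lra.
assert (Ep0 : 0 < Eplus x). { unfold Eplus. destruct (disc_root_spec x H). destruct (Lplus_Lminus_nonneg x H). apply Rdiv_lt_0_compat; lra. }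
assert (Et : t_exit (phi t x) = - t + t_exit x).
{ unfold t_exit. rewrite HEp. rewrite ln_mult. rewrite ln_exp. ring. apply exp_pos. auto. }
unfold exit_pt. rewrite Et. rewrite phi_shift; auto. f_equal. ring. replace (- t + t_exit x + t) with (t_exit x) by ring. auto.
Qed.

(** * The explicit solution *)

(* Pplus = e^(-a t_exit) and Pminus = e^(a t_entry). The weights of f at the entry and exit
   points are sinh (a t_exit) / sinh (a (t_exit - t_entry)) and sinh (- a t_entry) / sinh (a (t_exit - t_entry)),
   rewritten in Pplus and Pminus so that they extend to infinite exit times. den vanishes only
   when the orbit touches the boundary tangentially (t_entry = t_exit = 0). *)
Definition Pplus x := rpow0 (Eplus x) (a x).
Definition Pminus x := rpow0 (Eminus x) (a x).
Definition den x := 1 - Pplus x ^ 2 * Pminus x ^ 2.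
Definition c_entry x := if Req_EM_T (den x) 0 then / 2 else Pminus x * (1 - Pplus x ^ 2) / den x.
Definition c_exit x := if Req_EM_T (den x) 0 then / 2 else Pplus x * (1 - Pminus x ^ 2) / den x.
Definition L2 x := if excluded_middle_informative (BL x) then c_entry x * f (entry_pt x) + c_exit x * f (exit_pt x) else 0.
Definition Kplus x := (f (exit_pt x) * Pplus x - f (entry_pt x) * Pminus x * Pplus x ^ 2) / den x.
Definition Kminus x := (f (entry_pt x) * Pminus x - f (exit_pt x) * Pplus x * Pminus x ^ 2) / den x.
Definition L2_dot x := if excluded_middle_informative (BL x) then a x * (Kplus x - Kminus x) else 0.


Lemma P_range x : BL x -> 0 <= Pplus x <= 1 /\ 0 <= Pminus x <= 1.
Proof.
intros H. destruct (E_range x H) as [E1 E2]. pose proof (Ha_pos x H).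
split; apply rpow0_range; auto.
Qed.

Lemma den_spec x : BL x -> 0 <= den x /\ (den x = 0 -> Pplus x = 1 /\ Pminus x = 1).
Proof.
intros H. destruct (P_range x H) as [A B]. unfold den. apply one_sub_sq_prod; auto.
Qed.

Lemma c_spec x : BL x ->
  0 <= c_entry x <= Pminus x /\ 0 <= c_exit x <= Pplus x /\
  c_entry x + c_exit x = (Pplus x + Pminus x) / (1 + Pplus x * Pminus x).
Proof.
intros H. destruct (P_range x H) as [HPp HPm].
unfold c_entry, c_exit. destruct Req_EM_T as [Hd|Hd].
- destruct (den_spec x H) as [_ Hd']. destruct (Hd' Hd) as [-> ->]. split; [|split]; [lra|lra|field].
- unfold den in *. split; [|split].
  + apply bvp_weight_bounds; auto.
  + replace (Pplus x ^ 2 * Pminus x ^ 2) with (Pminus x ^ 2 * Pplus x ^ 2) in * by ring.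
    apply bvp_weight_bounds; auto.
  + apply bvp_weight_sum; auto.
Qed.

Lemma tangent_E_eq1 x : BL x -> den x = 0 -> Eplus x = 1 /\ Eminus x = 1.
Proof.
intros H Hd. destruct (den_spec x H) as [_ Hd']. destruct (Hd' Hd) as [H1 H2].
pose proof (Ha_pos x H). destruct (E_range x H).
split; eapply rpow0_eq1; eauto.
Qed.

Lemma entry_pt_tangent x : Eminus x = 1 -> entry_pt x = x.
Proof. intros H. unfold entry_pt, t_entry. rewrite H, ln_1. apply (pf_id _ _ _ Hflow). Qed.
Lemma exit_pt_tangent x : Eplus x = 1 -> exit_pt x = x.
Proof. intros H. unfold exit_pt, t_exit. rewrite H, ln_1, Ropp_0. apply (pf_id _ _ _ Hflow). Qed.

Lemma L2_BL x : BL x -> L2 x = c_entry x * f (entry_pt x) + c_exit x * f (exit_pt x).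
Proof. intros H. unfold L2. destruct excluded_middle_informative; tauto. Qed.
Lemma L2_dot_BL x : BL x -> L2_dot x = a x * (Kplus x - Kminus x).
Proof. intros H. unfold L2_dot. destruct excluded_middle_informative; tauto. Qed.

Lemma L2_Kplus_Kminus x : BL x -> den x <> 0 -> L2 x = Kplus x + Kminus x.
Proof.
intros H Hd. rewrite L2_BL by auto. unfold c_entry, c_exit, Kplus, Kminus. destruct Req_EM_T; [contradiction|].
field. auto.
Qed.

Lemma L2_Lam x : Lam x -> L2 x = 0.
Proof. intros H. unfold L2. destruct excluded_middle_informative as [[_ H']|]; tauto. Qed.

Lemma L2_boundary x : m_boundary M B x -> L2 x = f x.
Proof.
intros Hb. destruct (boundary_B_inv x Hb) as [H Hl].
destruct (Lplus_Lminus_nonneg x H) as [Hu Hv]. rewrite L1_Lplus_Lminus in Hl.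
destruct (disc_root_spec x H) as [HD1 HD2].
rewrite L2_BL by auto.
assert (Hd2 : disc_root x ^ 2 = (Lplus x - Lminus x) ^ 2) by (rewrite HD2, <- Hl; ring).
destruct (Req_EM_T (den x) 0) as [Hd|Hd].
- destruct (tangent_E_eq1 x H Hd) as [E1 E2]. rewrite entry_pt_tangent, exit_pt_tangent by auto.
  unfold c_entry, c_exit. destruct Req_EM_T; [|contradiction]. field.
- destruct (Rle_dec (Lminus x) (Lplus x)) as [Huv|Huv].
  + assert (disc_root x = Lplus x - Lminus x).
    { apply Rsqr_inj; [auto|lra|]. rewrite !Rsqr_pow2. exact Hd2. }
    assert (E1 : Eplus x = 1). { unfold Eplus. rewrite H0, <- Hl. field. intro; lra. }
    assert (Pplus x = 1). { unfold Pplus. rewrite E1. apply rpow0_1l. }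
    rewrite exit_pt_tangent by auto. unfold c_entry, c_exit. destruct Req_EM_T; [contradiction|].
    unfold den in *. rewrite H1 in *. field. intro Hc; apply Hd; rewrite <- Hc; ring.
  + apply Rnot_le_lt in Huv. assert (disc_root x = Lminus x - Lplus x).
    { apply Rsqr_inj; [auto|lra|]. rewrite !Rsqr_pow2, Hd2. ring. }
    assert (E1 : Eminus x = 1). { unfold Eminus. rewrite H0, <- Hl. field. intro; lra. }
    assert (Pminus x = 1). { unfold Pminus. rewrite E1. apply rpow0_1l. }
    rewrite entry_pt_tangent by auto. unfold c_entry, c_exit. destruct Req_EM_T; [contradiction|].
    unfold den in *. rewrite H1 in *. field. intro Hc; apply Hd; rewrite <- Hc; ring.
Qed.

Lemma disc_denom_pos x : BL x -> delta + disc_root x > 0.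
Proof. intros H. destruct (disc_root_spec x H). lra. Qed.

Lemma Eplus_sign x : BL x -> (Lplus x > 0 -> Eplus x > 0) /\ (Lplus x = 0 -> Eplus x = 0).
Proof. intros H. pose proof (disc_denom_pos x H). unfold Eplus. split; intros Hu. apply Rdiv_lt_0_compat; lra. rewrite Hu. unfold Rdiv. ring. Qed.
Lemma Eminus_sign x : BL x -> (Lminus x > 0 -> Eminus x > 0) /\ (Lminus x = 0 -> Eminus x = 0).
Proof. intros H. pose proof (disc_denom_pos x H). unfold Eminus. split; intros Hu. apply Rdiv_lt_0_compat; lra. rewrite Hu. unfold Rdiv. ring. Qed.

Lemma entry_pt_boundary x : BL x -> Lminus x > 0 -> m_boundary M B (entry_pt x) /\ BL (entry_pt x) /\ Gamma (t_entry x) x.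
Proof.
intros H Hv. destruct (entry_spec x H Hv) as [Htm [HG [HB HL]]].
destruct (int_path_at x _ (t_entry x) HG) as [Gm _]. unfold Rmin, Rmax; destruct Rle_dec; lra.
assert (BLe : BL (entry_pt x)). { apply BL_on_orbit; auto. apply HB. lra. }
split; auto. apply boundary_B_intro; auto.
Qed.

Lemma exit_pt_boundary x : BL x -> Lplus x > 0 -> m_boundary M B (exit_pt x) /\ BL (exit_pt x) /\ Gamma (t_exit x) x.
Proof.
intros H Hu. destruct (exit_spec x H Hu) as [Htp [HG [HB HL]]].
destruct (int_path_at x _ (t_exit x) HG) as [Gp _]. unfold Rmin, Rmax; destruct Rle_dec; lra.
assert (BLe : BL (exit_pt x)). { apply BL_on_orbit; auto. apply HB. lra. }
split; auto. apply boundary_B_intro; auto.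
Qed.

Lemma f_exit_transport x t : BL x -> int_path x t -> B (phi t x) ->
  f (exit_pt (phi t x)) * Pplus (phi t x) = f (exit_pt x) * Pplus x * exp (a x * t).
Proof.
intros H HG Bt. destruct (orbit_transport x t H HG Bt) as [_ [_ [_ [Ea [_ [HEp _]]]]]].
destruct (Lplus_Lminus_nonneg x H) as [Hu _]. destruct (E_range x H) as [[E1 _] _].
unfold Pplus at 1. rewrite Ea, HEp, rpow0_mul_exp by auto.
destruct (Rle_lt_or_eq_dec _ _ Hu) as [Hu'|Hu'].
- rewrite exit_pt_invariant by auto. fold (Pplus x). ring.
- symmetry in Hu'. rewrite (proj2 (Eplus_sign x H) Hu'). unfold Pplus. rewrite (proj2 (Eplus_sign x H) Hu'), rpow0_0l. ring.
Qed.

Lemma f_entry_transport x t : BL x -> int_path x t -> B (phi t x) ->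
  f (entry_pt (phi t x)) * Pminus (phi t x) = f (entry_pt x) * Pminus x * exp (a x * (- t)).
Proof.
intros H HG Bt. destruct (orbit_transport x t H HG Bt) as [_ [_ [_ [Ea [_ [_ HEm]]]]]].
destruct (Lplus_Lminus_nonneg x H) as [_ Hv]. destruct (E_range x H) as [_ [E1 _]].
unfold Pminus at 1. rewrite Ea, HEm, rpow0_mul_exp by auto.
destruct (Rle_lt_or_eq_dec _ _ Hv) as [Hv'|Hv'].
- rewrite entry_pt_invariant by auto. fold (Pminus x). ring.
- symmetry in Hv'. rewrite (proj2 (Eminus_sign x H) Hv'). unfold Pminus. rewrite (proj2 (Eminus_sign x H) Hv'), rpow0_0l. ring.
Qed.

Lemma L2_along_orbit x t : BL x -> den x <> 0 -> int_path x t -> B (phi t x) ->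
  L2 (phi t x) = Kplus x * exp (a x * t) + Kminus x * exp (- (a x) * t) /\
  L2_dot (phi t x) = a x * (Kplus x * exp (a x * t) - Kminus x * exp (- (a x) * t)).
Proof.
intros H Hd HG Bt. destruct (orbit_transport x t H HG Bt) as [BLt [_ [_ [Ea [_ [HEp HEm]]]]]].
pose proof (f_exit_transport x t H HG Bt) as F1. pose proof (f_entry_transport x t H HG Bt) as F2.
destruct (E_range x H) as [[E1 _] [E2 _]].
assert (HPp : Pplus (phi t x) = exp (a x * t) * Pplus x). { unfold Pplus. rewrite Ea, HEp, rpow0_mul_exp; auto. }
assert (HPm : Pminus (phi t x) = exp (a x * (- t)) * Pminus x). { unfold Pminus. rewrite Ea, HEm, rpow0_mul_exp; auto. }
assert (Hee : exp (a x * t) * exp (a x * (- t)) = 1).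
{ rewrite <- exp_plus. replace (a x * t + a x * (- t)) with 0 by ring. apply exp_0. }
assert (Hden : den (phi t x) = den x).
{ unfold den. rewrite HPp, HPm.
  replace ((exp (a x * t) * Pplus x) ^ 2 * (exp (a x * - t) * Pminus x) ^ 2) with
    ((exp (a x * t) * exp (a x * - t)) ^ 2 * (Pplus x ^ 2 * Pminus x ^ 2)) by ring. rewrite Hee. ring. }
assert (EK1 : Kplus (phi t x) = Kplus x * exp (a x * t)).
{ unfold Kplus. rewrite Hden.
  replace (f (exit_pt (phi t x)) * Pplus (phi t x) - f (entry_pt (phi t x)) * Pminus (phi t x) * Pplus (phi t x) ^ 2)
   with (f (exit_pt (phi t x)) * Pplus (phi t x) - (f (entry_pt (phi t x)) * Pminus (phi t x)) * Pplus (phi t x) ^ 2) by ring.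
  rewrite F1, F2, HPp. field_simplify; auto.
  replace (exp (a x * - t)) with (/ exp (a x * t)).
  field. split; auto. pose proof (exp_pos (a x * t)); lra.
  rewrite <- exp_Ropp. f_equal. ring. }
assert (EK2 : Kminus (phi t x) = Kminus x * exp (- (a x) * t)).
{ unfold Kminus. rewrite Hden.
  replace (f (entry_pt (phi t x)) * Pminus (phi t x) - f (exit_pt (phi t x)) * Pplus (phi t x) * Pminus (phi t x) ^ 2)
   with (f (entry_pt (phi t x)) * Pminus (phi t x) - (f (exit_pt (phi t x)) * Pplus (phi t x)) * Pminus (phi t x) ^ 2) by ring.
  rewrite F1, F2, HPm. replace (- a x * t) with (a x * - t) by ring.
  replace (exp (a x * t)) with (/ exp (a x * - t)).
  field. split; auto. pose proof (exp_pos (a x * - t)); lra.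
  rewrite <- exp_Ropp. f_equal. ring. }
split.
- rewrite L2_Kplus_Kminus; auto. rewrite EK1, EK2. auto. rewrite Hden; auto.
- rewrite L2_dot_BL; auto. rewrite Ea, EK1, EK2. auto.
Qed.

Lemma tangent_leaves_B x : BL x -> den x = 0 -> exists e, e > 0 /\ forall t, t <> 0 -> Rabs t < e -> ~ B (phi t x).
Proof.
intros H Hd. destruct (tangent_E_eq1 x H Hd) as [E1 E2]. destruct (int_path_near x H) as [e [He HG]].
exists e. split; auto. intros t Ht0 Ht Bt.
destruct (L1_on_int_path x t (HG t Ht)) as [HL _]. destruct Bt as [_ Lt]. rewrite HL in Lt.
pose proof (disc_denom_pos x H). destruct (disc_root_spec x H) as [HD _].
assert (Hu : 2 * Lplus x = delta + disc_root x). { unfold Eplus in E1. apply Rmult_eq_reg_r with (/ (delta + disc_root x)).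
  rewrite Rinv_r by lra. auto. apply Rinv_neq_0_compat. lra. }
assert (Hv : 2 * Lminus x = delta + disc_root x). { unfold Eminus in E2. apply Rmult_eq_reg_r with (/ (delta + disc_root x)).
  rewrite Rinv_r by lra. auto. apply Rinv_neq_0_compat. lra. }
assert (exp t <> 1). { intros E. apply Ht0. rewrite <- exp_0 in E. apply exp_inv in E. auto. }
pose proof (exp_pos t). rewrite exp_Ropp in Lt. set (p := exp t) in *. clearbody p.
assert (Lplus x * p + Lminus x * / p > delta).
{ apply Rmult_lt_reg_r with p; auto. replace ((Lplus x * p + Lminus x * / p) * p) with (Lplus x * (p * p + 1)) by (field_simplify; [|lra]; rewrite <- Hu in Hv; field_simplify; lra).
  assert ((p - 1) * (p - 1) > 0). { assert (p - 1 <> 0) by lra. apply Rsqr_pos_lt in H3. unfold Rsqr in H3. auto. }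
  assert (Lplus x > 0) by lra. nra. }
lra.
Qed.

Lemma L2_orb_deriv x : BL x -> orb_deriv M Gamma phi BL L2 x (L2_dot x) /\
   orb_deriv M Gamma phi BL L2_dot x (a x ^ 2 * L2 x).
Proof.
intros H. destruct (Req_EM_T (den x) 0) as [Hd|Hd].
- destruct (tangent_leaves_B x H Hd) as [e [He Hn]].
  split; intros eps Heps; exists e; split; auto; intros t Ht0 Ht Gt BLt; exfalso; apply (Hn t); auto; apply BLt.
- destruct (int_path_near x H) as [e [He HG]].
  set (F := fun t => Kplus x * exp (a x * t) + Kminus x * exp (- (a x) * t)).
  set (F' := fun t => a x * (Kplus x * exp (a x * t) - Kminus x * exp (- (a x) * t))).
  assert (DF : derivable_pt_lim F 0 (L2_dot x)).
  { apply is_derive_Reals. unfold F. rewrite L2_dot_BL by auto.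
    auto_derive; auto. rewrite !Rmult_0_r, exp_0. ring. }
  assert (DF' : derivable_pt_lim F' 0 (a x ^ 2 * L2 x)).
  { apply is_derive_Reals. unfold F'. rewrite L2_Kplus_Kminus by auto.
    auto_derive; auto. rewrite !Rmult_0_r, exp_0. ring. }
  split.
  + apply orb_deriv_of_derivable with F; auto.
    * exists e. split; auto. intros t _ Ht Gt BLt. apply (L2_along_orbit x t H Hd (HG t Ht) (proj1 BLt)).
    * unfold F. rewrite L2_Kplus_Kminus by auto. rewrite !Rmult_0_r, exp_0. ring.
  + apply orb_deriv_of_derivable with F'; auto.
    * exists e. split; auto. intros t _ Ht Gt BLt. apply (L2_along_orbit x t H Hd (HG t Ht) (proj1 BLt)).
    * unfold F'. rewrite L2_dot_BL by auto. rewrite !Rmult_0_r, exp_0. ring.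
Qed.

Lemma L2_pos : (forall x, m_boundary M B x -> f x > 0) -> forall x, BL x -> L2 x > 0.
Proof.
intros Hf x H. rewrite L2_BL by auto.
destruct (Lplus_Lminus_nonneg x H) as [Hu Hv]. destruct (P_range x H) as [[A1 A2] [B1 B2]].
destruct (Req_EM_T (den x) 0) as [Hd|Hd].
- destruct (tangent_E_eq1 x H Hd) as [E1 E2]. rewrite entry_pt_tangent, exit_pt_tangent by auto.
  unfold c_entry, c_exit. destruct Req_EM_T; [|contradiction].
  assert (Lplus x > 0 \/ Lminus x > 0). { destruct H as [[Nx _] Lx]. pose proof (HL1_pos x Nx Lx). rewrite L1_Lplus_Lminus in H. lra. }
  assert (Hb : m_boundary M B x).
  { destruct H0 as [H0|H0].
    - pose proof (exit_pt_boundary x H H0) as [Hb _]. rewrite exit_pt_tangent in Hb; auto.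
    - pose proof (entry_pt_boundary x H H0) as [Hb _]. rewrite entry_pt_tangent in Hb; auto. }
  pose proof (Hf x Hb). lra.
- destruct (c_spec x H) as [C1 [C2 C3]].
  assert (T1 : 0 <= c_entry x * f (entry_pt x) /\ (c_entry x > 0 -> c_entry x * f (entry_pt x) > 0)).
  { destruct (Rle_lt_or_eq_dec _ _ Hv) as [Hv'|Hv'].
    - pose proof (Hf _ (proj1 (entry_pt_boundary x H Hv'))). split. apply Rmult_le_pos; lra. intros; apply Rmult_lt_0_compat; lra.
    - symmetry in Hv'. assert (Pminus x = 0) by (unfold Pminus; rewrite (proj2 (Eminus_sign x H) Hv'); apply rpow0_0l).
      unfold c_entry. destruct Req_EM_T; [contradiction|]. rewrite H0. unfold Rdiv. split. lra. intros; lra. }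
  assert (T2 : 0 <= c_exit x * f (exit_pt x) /\ (c_exit x > 0 -> c_exit x * f (exit_pt x) > 0)).
  { destruct (Rle_lt_or_eq_dec _ _ Hu) as [Hu'|Hu'].
    - pose proof (Hf _ (proj1 (exit_pt_boundary x H Hu'))). split. apply Rmult_le_pos; lra. intros; apply Rmult_lt_0_compat; lra.
    - symmetry in Hu'. assert (Pplus x = 0) by (unfold Pplus; rewrite (proj2 (Eplus_sign x H) Hu'); apply rpow0_0l).
      unfold c_exit. destruct Req_EM_T; [contradiction|]. rewrite H0. unfold Rdiv. split. lra. intros; lra. }
  assert (Hs : Pplus x + Pminus x > 0).
  { pose proof H as [[Nx _] Lx]. pose proof (HL1_pos x Nx Lx) as H0'. rewrite L1_Lplus_Lminus in H0'.
    assert (H0 : BL x) by auto.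
    destruct (Rle_lt_or_eq_dec _ _ Hu) as [Hu'|Hu'].
    - assert (Pplus x > 0) by (unfold Pplus; apply rpow0_pos; apply (Eplus_sign x H0); auto). lra.
    - assert (Pminus x > 0) by (unfold Pminus; apply rpow0_pos; apply (Eminus_sign x H0); lra). lra. }
  assert (c_entry x + c_exit x > 0). { rewrite C3. apply Rdiv_lt_0_compat; auto. assert (0 <= Pplus x * Pminus x) by (apply Rmult_le_pos; lra). lra. }
  destruct (Rle_lt_or_eq_dec 0 (c_entry x) (proj1 C1)) as [P1|P1].
  + pose proof (proj2 T1 P1). lra.
  + assert (c_exit x > 0) by lra. pose proof (proj2 T2 H1). lra.
Qed.

Lemma orbit_continuous_comp (g : X -> R) x s0 : m_continuous_on M B g -> Gamma s0 x -> B (phi s0 x) ->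
  forall eps, eps > 0 -> exists eta, eta > 0 /\ forall s, Gamma s x -> B (phi s x) -> Rabs (s - s0) < eta ->
    Rabs (g (phi s x) - g (phi s0 x)) < eps.
Proof.
intros Hc Gs Bs eps Heps. destruct (Hc _ Bs eps Heps) as [r [Hr H]].
destruct (orbit_continuous x s0 Gs r Hr) as [eta [Heta Ho]].
exists eta. split; [auto|]. intros s G1 B1 Hs. apply H; auto.
Qed.

(** * Uniqueness *)

(* s lies strictly between the entry and exit times; a missing entry (Lminus = 0) or exit
   (Lplus = 0) imposes no bound. *)
Definition in_transit x s := (Lminus x > 0 -> t_entry x < s) /\ (Lplus x > 0 -> s < t_exit x).

Lemma in_transit_path x s : BL x -> in_transit x s -> int_path x s /\ B (phi s x).
Proof.
intros H [H1 H2]. destruct (Lplus_Lminus_nonneg x H) as [Hu Hv].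
destruct (Rle_dec 0 s) as [Hs|Hs].
- destruct (Rle_lt_or_eq_dec _ _ Hu) as [Hu'|Hu'].
  + destruct (exit_spec x H Hu') as [Htp [HG [HB _]]]. specialize (H2 Hu').
    split; [|apply HB; lra]. apply int_path_intro. intros r Hr. apply (int_path_at x _ r HG).
    unfold Rmin, Rmax in *; destruct (Rle_dec 0 s); destruct (Rle_dec 0 (t_exit x)); lra.
  + symmetry in Hu'. destruct (forward_in_B x H Hu' s Hs) as [HG HB]. split; auto. apply HB; lra.
- destruct (Rle_lt_or_eq_dec _ _ Hv) as [Hv'|Hv'].
  + destruct (entry_spec x H Hv') as [Htm [HG [HB _]]]. specialize (H1 Hv').
    split; [|apply HB; lra]. apply int_path_intro. intros r Hr. apply (int_path_at x _ r HG).
    unfold Rmin, Rmax in *; destruct (Rle_dec 0 s); destruct (Rle_dec 0 (t_entry x)); lra.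
  + symmetry in Hv'. destruct (backward_in_B x H Hv' s ltac:(lra)) as [HG HB]. split; auto. apply HB; lra.
Qed.

Lemma in_transit_BL x s : BL x -> in_transit x s -> Gamma s x /\ BL (phi s x).
Proof.
intros H Hi. destruct (in_transit_path x s H Hi) as [HG HB].
destruct (int_path_at x s s HG) as [Gs _]. unfold Rmin, Rmax; destruct Rle_dec; lra.
split; auto. apply BL_on_orbit; auto.
Qed.

Lemma in_transit_open x s : in_transit x s -> exists eta, eta > 0 /\ forall h, Rabs h < eta -> in_transit x (h + s).
Proof.
intros [H1 H2].
set (e1 := if Rlt_dec 0 (Lminus x) then s - t_entry x else 1).
set (e2 := if Rlt_dec 0 (Lplus x) then t_exit x - s else 1).
assert (He1 : e1 > 0) by (unfold e1; destruct (Rlt_dec 0 (Lminus x)) as [Hr|Hr]; [specialize (H1 Hr); lra|lra]).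
assert (He2 : e2 > 0) by (unfold e2; destruct (Rlt_dec 0 (Lplus x)) as [Hr|Hr]; [specialize (H2 Hr); lra|lra]).
exists (Rmin e1 e2). split. apply Rmin_pos; auto.
intros h Hh. assert (Hm1 := Rmin_l e1 e2). assert (Hm2 := Rmin_r e1 e2). apply Rabs_lt_between in Hh.
split; intros Hp.
- specialize (H1 Hp). unfold e1 in *. destruct (Rlt_dec 0 (Lminus x)); [|lra]. lra.
- specialize (H2 Hp). unfold e2 in *. destruct (Rlt_dec 0 (Lplus x)); [|lra]. lra.
Qed.

Lemma in_transit_convex x s1 s2 s : in_transit x s1 -> in_transit x s2 -> Rmin s1 s2 <= s <= Rmax s1 s2 -> in_transit x s.
Proof.
intros [A1 A2] [B1 B2] Hs. unfold Rmin, Rmax in Hs. split; intros Hp.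
- specialize (A1 Hp); specialize (B1 Hp). destruct Rle_dec in Hs; lra.
- specialize (A2 Hp); specialize (B2 Hp). destruct Rle_dec in Hs; lra.
Qed.

Lemma in_transit_0 x : BL x -> L1 x < delta -> in_transit x 0.
Proof.
intros H HLt. split; intros Hp.
- destruct (entry_spec x H Hp) as [Htm [_ [_ HLe]]]. destruct (Rle_lt_or_eq_dec _ _ Htm) as [|E]; auto.
  exfalso. unfold entry_pt in HLe. rewrite E, (pf_id _ _ _ Hflow) in HLe. lra.
- destruct (exit_spec x H Hp) as [Htp [_ [_ HLe]]]. destruct (Rle_lt_or_eq_dec _ _ Htp) as [|E]; auto.
  exfalso. unfold exit_pt in HLe. rewrite <- E, (pf_id _ _ _ Hflow) in HLe. lra.
Qed.

Section ZeroBoundary.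
Variables (g gd : X -> R).
Hypothesis Hg_cont : m_continuous_on M B g.
Hypothesis Hg_d : forall x, BL x -> orb_deriv M Gamma phi BL g x (gd x).
Hypothesis Hgd_d : forall x, BL x -> orb_deriv M Gamma phi BL gd x (a x ^ 2 * g x).
Hypothesis Hg_bd : forall x, m_boundary M B x -> g x = 0.

Lemma solution_along_orbit x : BL x -> in_transit x 0 -> exists A Bc, forall s, in_transit x s ->
  g (phi s x) = A * exp (a x * s) + Bc * exp (- a x * s).
Proof.
intros H I0. set (c := a x). assert (Hc : c > 0) by (apply Ha_pos; auto).
set (w := fun s => g (phi s x)). set (w' := fun s => gd (phi s x)).
exists ((w' 0 + c * w 0) / (2 * c)), (- ((w' 0 - c * w 0) / (2 * c))).
intros s Hs.
destruct (exp_ode_solution c w w' s) as [E _]; [lra| |change (g (phi s x)) with (w s); rewrite E; ring].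
intros r Hr. assert (Ir : in_transit x r) by (apply (in_transit_convex x 0 s); auto).
destruct (in_transit_BL x r H Ir) as [Gr BLr].
assert (Nb : exists eta, eta > 0 /\ forall h, Rabs h < eta -> Gamma (h + r) x /\ BL (phi (h + r) x)).
{ destruct (in_transit_open x r Ir) as [eta [Heta Ho]]. exists eta. split; auto.
  intros h Hh. apply in_transit_BL; auto. }
assert (Ea : a (phi r x) = c).
{ destruct (in_transit_path x r H Ir) as [HGr HBr]. apply a_const_on_orbit; auto. }
split; apply orbit_derivable with BL; auto. rewrite <- Ea. apply Hgd_d; auto.
Qed.

Lemma exp_model_zero_at_endpoint x A Bc t0 : t0 <> 0 -> int_path x t0 ->
  (forall s, Rmin 0 t0 <= s <= Rmax 0 t0 -> B (phi s x)) ->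
  (forall s, Rmin 0 t0 <= s <= Rmax 0 t0 -> s <> t0 ->
     g (phi s x) = A * exp (a x * s) + Bc * exp (- a x * s)) ->
  g (phi t0 x) = 0 -> A * exp (a x * t0) + Bc * exp (- a x * t0) = 0.
Proof.
intros Ht0 HG HB Hsol Hg0.
set (mf := fun s => A * exp (a x * s) + Bc * exp (- a x * s)).
set (I := fun s => Rmin 0 t0 <= s <= Rmax 0 t0).
assert (It0 : I t0) by (unfold I, Rmin, Rmax; destruct Rle_dec; lra).
assert (Cmf : Rcont_at mf t0).
{ assert (D : ex_derive mf t0) by (unfold mf; auto_derive; auto).
  destruct D as [l Hl]. apply Rcont_at_of_derivable with l. apply is_derive_Reals, Hl. }
cut ((fun s => g (phi s x) - mf s) t0 = 0); [cbv beta; unfold mf; lra|].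
apply (eq0_of_dense_zeros (fun s => g (phi s x) - mf s) I).
- intros eta Heta. set (r := Rmin 1 (eta / (2 * Rabs t0))).
  assert (Ht : Rabs t0 > 0) by (apply Rabs_pos_lt; auto).
  assert (Hr : 0 < r <= 1) by (split; [apply Rmin_pos; [lra|apply Rdiv_lt_0_compat; lra]|apply Rmin_l]).
  assert (Hre : r * Rabs t0 <= eta / 2).
  { apply Rle_trans with (eta / (2 * Rabs t0) * Rabs t0); [apply Rmult_le_compat_r; [lra|apply Rmin_r]|].
    right. field. lra. }
  exists (t0 * (1 - r)). split; [|split].
  + unfold I, Rmin, Rmax. destruct Rle_dec; split; nra.
  + replace (t0 * (1 - r) - t0) with (- (r * t0)) by ring.
    rewrite Rabs_Ropp, Rabs_mult, (Rabs_right r) by lra. lra.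
  + cbv beta. rewrite Hsol; [unfold mf; ring|unfold Rmin, Rmax; destruct Rle_dec; split; nra|].
    intro E. assert (r * t0 = 0) by lra. apply Rmult_integral in H as [|]; lra.
- intros eps Heps.
  destruct (int_path_at x t0 t0 HG It0) as [Gt0 _].
  destruct (orbit_continuous_comp g x t0 Hg_cont Gt0 (HB t0 It0) (eps / 2)) as [e1 [He1 H1]]; [lra|].
  destruct (Cmf (eps / 2)) as [e2 [He2 H2]]; [lra|].
  exists (Rmin e1 e2). split; [apply Rmin_pos; auto|].
  intros s Is Hs. pose proof (Rmin_l e1 e2). pose proof (Rmin_r e1 e2).
  destruct (int_path_at x t0 s HG Is) as [Gs _].
  specialize (H1 s Gs (HB s Is) ltac:(lra)). specialize (H2 s ltac:(lra)).
  replace (g (phi s x) - mf s - (g (phi t0 x) - mf t0))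
    with ((g (phi s x) - g (phi t0 x)) - (mf s - mf t0)) by ring.
  eapply Rle_lt_trans; [apply Rabs_triang|]. rewrite Rabs_Ropp. lra.
Qed.

Lemma exit_condition x A Bc : BL x -> in_transit x 0 ->
  (forall s, in_transit x s -> g (phi s x) = A * exp (a x * s) + Bc * exp (- a x * s)) ->
  (Lplus x > 0 -> A * exp (a x * t_exit x) + Bc * exp (- a x * t_exit x) = 0) /\ (Lplus x = 0 -> A = 0).
Proof.
intros H I0 Hsol. split; intros Hp.
- pose proof (proj2 I0 Hp) as Htp. destruct (exit_spec x H Hp) as [_ [HG [HB _]]].
  apply exp_model_zero_at_endpoint; auto; [lra| | |].
  + intros s Hs. apply HB. rewrite Rmin_left, Rmax_right in Hs; lra.
  + intros s Hs Hne. rewrite Rmin_left, Rmax_right in Hs by lra. apply Hsol.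
    split; intros Hq; [pose proof (proj1 I0 Hq)|]; lra.
  + apply Hg_bd, (exit_pt_boundary x H Hp).
- destruct (B_bounded g Hg_cont) as [K HK].
  apply (exp_combination_bounded (a x) A Bc K (Ha_pos x H)). intros s Hs.
  assert (Is : in_transit x s) by (split; intros Hq; [pose proof (proj1 I0 Hq)|]; lra).
  rewrite <- Hsol by auto. apply HK, (in_transit_path x s H Is).
Qed.

Lemma entry_condition x A Bc : BL x -> in_transit x 0 ->
  (forall s, in_transit x s -> g (phi s x) = A * exp (a x * s) + Bc * exp (- a x * s)) ->
  (Lminus x > 0 -> A * exp (a x * t_entry x) + Bc * exp (- a x * t_entry x) = 0) /\ (Lminus x = 0 -> Bc = 0).
Proof.
intros H I0 Hsol. split; intros Hv.
- pose proof (proj1 I0 Hv) as Htm. destruct (entry_spec x H Hv) as [_ [HG [HB _]]].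
  apply exp_model_zero_at_endpoint; auto; [lra| | |].
  + intros s Hs. apply HB. rewrite Rmin_right, Rmax_left in Hs; lra.
  + intros s Hs Hne. rewrite Rmin_right, Rmax_left in Hs by lra. apply Hsol.
    split; intros Hq; [|pose proof (proj2 I0 Hq)]; lra.
  + apply Hg_bd, (entry_pt_boundary x H Hv).
- destruct (B_bounded g Hg_cont) as [K HK].
  apply (exp_combination_bounded (a x) Bc A K (Ha_pos x H)). intros s Hs.
  assert (Is : in_transit x (- s)) by (split; intros Hq; [|pose proof (proj2 I0 Hq)]; lra).
  replace (Bc * exp (a x * s) + A * exp (- a x * s))
    with (A * exp (a x * - s) + Bc * exp (- a x * - s))
    by (replace (a x * - s) with (- a x * s) by ring; replace (- a x * - s) with (a x * s) by ring; ring).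
  rewrite <- Hsol by auto. apply HK, (in_transit_path x (- s) H Is).
Qed.

Lemma homogeneous_solution_zero x : BL x -> g x = 0.
Proof.
intros H. destruct (Req_dec (L1 x) delta) as [HL|HL]; [apply Hg_bd, boundary_B_intro; auto|].
assert (I0 : in_transit x 0) by (apply in_transit_0; auto; destruct H as [[_ ?] _]; lra).
destruct (solution_along_orbit x H I0) as [A [Bc Hsol]].
destruct (exit_condition x A Bc H I0 Hsol) as [Exit ExitInf].
destruct (entry_condition x A Bc H I0 Hsol) as [Entry EntryInf].
assert (AB : A = 0 /\ Bc = 0).
{ destruct (Lplus_Lminus_nonneg x H) as [Hu Hv].
  assert (Hpos : Lplus x > 0 \/ Lminus x > 0).
  { destruct H as [[Nx _] Lx]. pose proof (HL1_pos x Nx Lx). rewrite L1_Lplus_Lminus in H. lra. }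
  destruct (Rle_lt_or_eq_dec _ _ Hu) as [Hu'|Hu']; destruct (Rle_lt_or_eq_dec _ _ Hv) as [Hv'|Hv'].
  - apply (exp_combination_two_zeros (a x) A Bc (t_entry x) (t_exit x)); auto.
    pose proof (proj1 I0 Hv'); pose proof (proj2 I0 Hu'); lra.
  - pose proof (EntryInf (eq_sym Hv')) as ->. split; auto.
    pose proof (Exit Hu'). pose proof (exp_pos (a x * t_exit x)). nra.
  - pose proof (ExitInf (eq_sym Hu')) as ->. split; auto.
    pose proof (Entry Hv'). pose proof (exp_pos (- a x * t_entry x)). nra.
  - lra. }
pose proof (Hsol 0 I0) as E0. rewrite (pf_id _ _ _ Hflow) in E0.
rewrite E0. destruct AB as [-> ->]. ring.
Qed.

End ZeroBoundary.

(** * Continuity of the solution *)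

Lemma L1_flow_cont S t x0 : Gamma t x0 -> N (phi t x0) ->
  (exists r, r > 0 /\ forall y, d y x0 < r -> Gamma t y /\ N (phi t y)) ->
  m_cont_at S (fun y => L1 (phi t y)) x0.
Proof.
intros Gt Nt [r [Hr Hn]] eps Heps.
destruct (HL1_cont _ Nt eps Heps) as [rho [Hrho H]].
destruct (pf_cont _ _ _ Hflow t x0 Gt rho Hrho) as [e [He Hc]].
exists (Rmin r e). split. apply Rmin_pos; auto. intros y Sy Hy.
assert (Hm1 := Rmin_l r e). assert (Hm2 := Rmin_r r e).
destruct (Hn y) as [Gy Ny]. lra. apply H; auto. apply Hc; auto. rewrite Rminus_diag, Rabs_R0; auto. lra.
Qed.

(* Ld is recovered from the values of L1 at the times s and -s, which depend continuously on the point. *)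
Lemma Ld_cont S x0 : m_interior M N x0 -> m_cont_at S Ld x0.
Proof.
intros Ix. destruct (int_path_near_uniform x0 Ix) as [e [He Hw]].
set (s := e / 2). assert (Hs : 0 < s) by (unfold s; lra).
assert (Hs1 : Rabs s < e) by (unfold s; rewrite Rabs_right; lra).
assert (Hs2 : Rabs (- s) < e) by (unfold s; rewrite Rabs_Ropp, Rabs_right; lra).
assert (Hat : forall y t, d y x0 < e -> Rabs t < e -> Gamma t y /\ N (phi t y)).
{ intros y t Hy Ht. destruct (int_path_at y t t (Hw y t Hy Ht)) as [G I];
    [unfold Rmin, Rmax; destruct Rle_dec; lra|].
  split; [exact G|apply (m_interior_sub N); exact I]. }
assert (Hden : exp s - exp (- s) > 0) by (assert (exp (-s) < exp s) by (apply exp_increasing; lra); lra).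
assert (Hf : forall y, d y x0 < e -> Ld y = (L1 (phi s y) - L1 (phi (- s) y)) / (exp s - exp (- s))).
{ intros y Hy.
  destruct (L1_on_int_path y s (Hw y s Hy Hs1)) as [E1 _].
  destruct (L1_on_int_path y (- s) (Hw y (- s) Hy Hs2)) as [E2 _].
  rewrite E1, E2, Ropp_involutive. unfold Lplus, Lminus. field. lra. }
assert (HL1t : forall t, Rabs t < e -> m_cont_at S (fun y => L1 (phi t y)) x0).
{ intros t Ht. destruct (Hat x0 t) as [Gt Nt]; [rewrite dist_self; lra|auto|].
  apply L1_flow_cont; auto. exists e. split; auto. }
apply m_cont_at_ext with (fun y => (L1 (phi s y) - L1 (phi (- s) y)) / (exp s - exp (- s))).
- apply m_cont_at_div; [apply m_cont_at_minus; apply HL1t; auto|apply m_cont_at_const|lra].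
- exists e. split; auto. intros y _ Hy. symmetry. apply Hf; auto.
- symmetry. apply Hf. rewrite dist_self; auto.
Qed.

Lemma L1_cont x0 : B x0 -> m_cont_at B L1 x0.
Proof.
intros [Nx _] eps Heps. destruct (HL1_cont x0 Nx eps Heps) as [r [Hr H]]. exists r. split; auto.
intros y [Ny _] Hy. apply H; auto.
Qed.

Lemma BL_open_in_B x0 : BL x0 -> exists r, r > 0 /\ forall y, B y -> d y x0 < r -> BL y.
Proof.
intros H. pose proof H as [[Nx Lx] Lm]. pose proof (HL1_pos x0 Nx Lm).
destruct (HL1_cont x0 Nx (L1 x0 / 2)) as [r [Hr Hc]]. lra.
exists r. split; auto. intros y By Hy. split; auto. intros HL.
specialize (Hc y (proj1 By) Hy). rewrite HL1_Lam in Hc; auto. rewrite Rminus_0_l, Rabs_Ropp, Rabs_right in Hc; lra.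
Qed.

Lemma m_cont_at_BL_B g x0 : BL x0 -> m_cont_at BL g x0 -> m_cont_at B g x0.
Proof.
intros H Hc eps Heps. destruct (BL_open_in_B x0 H) as [r [Hr Hn]]. destruct (Hc eps Heps) as [r' [Hr' H']].
exists (Rmin r r'). split. apply Rmin_pos; auto. intros y By Hy.
assert (Hm1 := Rmin_l r r'). assert (Hm2 := Rmin_r r r'). apply H'. apply Hn; auto; lra. lra.
Qed.

Lemma Lplus_Lminus_cont x0 : BL x0 -> m_cont_at BL Lplus x0 /\ m_cont_at BL Lminus x0.
Proof.
intros H. pose proof H as [[Nx Lx] _].
assert (C1 : m_cont_at BL L1 x0). { apply m_cont_at_sub with B. intros y [By _]; auto. apply L1_cont. apply H. }
assert (C2 : m_cont_at BL Ld x0). { apply Ld_cont. apply HB_int; auto. }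
split; unfold Lplus, Lminus; apply m_cont_at_div; auto using m_cont_at_plus, m_cont_at_minus, m_cont_at_const; lra.
Qed.

Lemma disc_root_cont x0 : BL x0 -> m_cont_at BL disc_root x0.
Proof.
intros H. destruct (Lplus_Lminus_cont x0 H) as [Cu Cv].
unfold disc_root. apply (m_cont_at_comp BL (fun y => delta ^ 2 - 4 * Lplus y * Lminus y) x0 sqrt).
- apply m_cont_at_minus. apply m_cont_at_const. apply m_cont_at_mult; auto. apply m_cont_at_mult; auto. apply m_cont_at_const.
- apply Rcont_at_sqrt. apply disc_nonneg; auto.
Qed.

Lemma E_cont x0 : BL x0 -> m_cont_at BL Eplus x0 /\ m_cont_at BL Eminus x0.
Proof.
intros H. destruct (Lplus_Lminus_cont x0 H) as [Cu Cv]. pose proof (disc_root_cont x0 H). pose proof (disc_denom_pos x0 H).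
unfold Eplus, Eminus. split; apply m_cont_at_div; auto using m_cont_at_plus, m_cont_at_mult, m_cont_at_const; lra.
Qed.

Lemma P_cont x0 : BL x0 -> m_cont_at BL Pplus x0 /\ m_cont_at BL Pminus x0.
Proof.
intros H. destruct (E_cont x0 H) as [C1 C2].
assert (Ca : m_cont_at BL a x0) by exact (Ha_cont x0 H).
split; unfold Pplus, Pminus; apply (rpow0_cont BL m _ a x0); auto; intros y Hy; split; auto; apply E_range; auto.
Qed.

Lemma entry_pt_cont x0 : BL x0 -> Lminus x0 > 0 -> forall eps, eps > 0 -> exists r, r > 0 /\ forall y, BL y -> d y x0 < r ->
  m_boundary M B (entry_pt y) /\ d (entry_pt y) (entry_pt x0) < eps.
Proof.
intros H Hv eps Heps. destruct (Lplus_Lminus_cont x0 H) as [_ Cv]. destruct (E_cont x0 H) as [_ CE].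
destruct (Eminus_sign x0 H) as [Em0 _]. specialize (Em0 Hv).
assert (Ct : m_cont_at BL t_entry x0). { unfold t_entry. apply (m_cont_at_comp BL Eminus x0 ln); auto. apply Rcont_at_ln; auto. }
destruct (entry_pt_boundary x0 H Hv) as [_ [_ G0]].
destruct (pf_cont _ _ _ Hflow _ _ G0 eps Heps) as [e [He Hc]].
destruct (Ct e He) as [r1 [Hr1 H1]]. destruct (Cv (Lminus x0 / 2)) as [r2 [Hr2 H2]]. lra.
exists (Rmin (Rmin r1 r2) e). split. repeat apply Rmin_pos; auto.
intros y BLy Hy. assert (Hm1 := Rmin_l (Rmin r1 r2) e). assert (Hm2 := Rmin_r (Rmin r1 r2) e).
assert (Hm3 := Rmin_l r1 r2). assert (Hm4 := Rmin_r r1 r2).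
specialize (H2 y BLy ltac:(lra)). apply Rabs_lt_between in H2.
destruct (entry_pt_boundary y BLy ltac:(lra)) as [Hb [_ Gy]]. split; auto.
apply Hc; auto. apply H1; auto; lra. lra.
Qed.

Lemma exit_pt_cont x0 : BL x0 -> Lplus x0 > 0 -> forall eps, eps > 0 -> exists r, r > 0 /\ forall y, BL y -> d y x0 < r ->
  m_boundary M B (exit_pt y) /\ d (exit_pt y) (exit_pt x0) < eps.
Proof.
intros H Hu eps Heps. destruct (Lplus_Lminus_cont x0 H) as [Cu _]. destruct (E_cont x0 H) as [CE _].
destruct (Eplus_sign x0 H) as [Ep0 _]. specialize (Ep0 Hu).
assert (Ct : m_cont_at BL t_exit x0). { unfold t_exit. apply (m_cont_at_comp BL (fun y => ln (Eplus y)) x0 Ropp).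
  apply (m_cont_at_comp BL Eplus x0 ln); auto. apply Rcont_at_ln; auto.
  intros e He. exists e. split; auto. intros z Hz. replace (- z - - ln (Eplus x0)) with (- (z - ln (Eplus x0))) by ring.
  rewrite Rabs_Ropp; auto. }
destruct (exit_pt_boundary x0 H Hu) as [_ [_ G0]].
destruct (pf_cont _ _ _ Hflow _ _ G0 eps Heps) as [e [He Hc]].
destruct (Ct e He) as [r1 [Hr1 H1]]. destruct (Cu (Lplus x0 / 2)) as [r2 [Hr2 H2]]. lra.
exists (Rmin (Rmin r1 r2) e). split. repeat apply Rmin_pos; auto.
intros y BLy Hy. assert (Hm1 := Rmin_l (Rmin r1 r2) e). assert (Hm2 := Rmin_r (Rmin r1 r2) e).
assert (Hm3 := Rmin_l r1 r2). assert (Hm4 := Rmin_r r1 r2).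
specialize (H2 y BLy ltac:(lra)). apply Rabs_lt_between in H2.
destruct (exit_pt_boundary y BLy ltac:(lra)) as [Hb [_ Gy]]. split; auto.
apply Hc; auto. apply H1; auto; lra. lra.
Qed.

Lemma f_entry_cont x0 : BL x0 -> Lminus x0 > 0 -> m_cont_at BL (fun y => f (entry_pt y)) x0.
Proof.
intros H Hv eps Heps. destruct (entry_pt_boundary x0 H Hv) as [Hb _].
destruct (Hf_cont _ Hb eps Heps) as [rho [Hrho Hc]].
destruct (entry_pt_cont x0 H Hv rho Hrho) as [r [Hr Hn]]. exists r. split; auto.
intros y BLy Hy. destruct (Hn y BLy Hy). apply Hc; auto.
Qed.

Lemma f_exit_cont x0 : BL x0 -> Lplus x0 > 0 -> m_cont_at BL (fun y => f (exit_pt y)) x0.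
Proof.
intros H Hu eps Heps. destruct (exit_pt_boundary x0 H Hu) as [Hb _].
destruct (Hf_cont _ Hb eps Heps) as [rho [Hrho Hc]].
destruct (exit_pt_cont x0 H Hu rho Hrho) as [r [Hr Hn]]. exists r. split; auto.
intros y BLy Hy. destruct (Hn y BLy Hy). apply Hc; auto.
Qed.

Lemma L2_not_BL y : ~ BL y -> L2 y = 0.
Proof. intros H. unfold L2. destruct excluded_middle_informative; tauto. Qed.

Lemma f_bounded : exists Mf, Mf >= 0 /\ forall z, m_boundary M B z -> Rabs (f z) <= Mf.
Proof.
destruct (boundary_bounded f Hf_cont) as [K HK]. exists (Rmax K 0). split. pose proof (Rmax_r K 0); lra.
intros z Hz. eapply Rle_trans. apply HK; auto. apply Rmax_l.
Qed.

Lemma L2_terms_bound Mf y : (forall z, m_boundary M B z -> Rabs (f z) <= Mf) -> Mf >= 0 -> BL y ->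
  Rabs (c_entry y * f (entry_pt y)) <= Mf * Pminus y /\ Rabs (c_exit y * f (exit_pt y)) <= Mf * Pplus y.
Proof.
intros HM HM0 H. destruct (c_spec y H) as [[C1 L1'] [[C2 L2'] _]]. destruct (Lplus_Lminus_nonneg y H) as [Hu Hv].
split.
- rewrite Rabs_mult, Rabs_right by lra.
  destruct (Rle_lt_or_eq_dec _ _ Hv) as [Hv'|Hv'].
  + pose proof (HM _ (proj1 (entry_pt_boundary y H Hv'))). pose proof (Rabs_pos (f (entry_pt y))).
    assert (c_entry y * Rabs (f (entry_pt y)) <= Pminus y * Rabs (f (entry_pt y))) by (apply Rmult_le_compat_r; lra).
    assert (Pminus y * Rabs (f (entry_pt y)) <= Pminus y * Mf) by (apply Rmult_le_compat_l; lra). lra.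
  + symmetry in Hv'. assert (Pminus y = 0) by (unfold Pminus; rewrite (proj2 (Eminus_sign y H) Hv'); apply rpow0_0l).
    assert (c_entry y = 0) by lra. rewrite H1, H0. lra.
- rewrite Rabs_mult, Rabs_right by lra.
  destruct (Rle_lt_or_eq_dec _ _ Hu) as [Hu'|Hu'].
  + pose proof (HM _ (proj1 (exit_pt_boundary y H Hu'))). pose proof (Rabs_pos (f (exit_pt y))).
    assert (c_exit y * Rabs (f (exit_pt y)) <= Pplus y * Rabs (f (exit_pt y))) by (apply Rmult_le_compat_r; lra).
    assert (Pplus y * Rabs (f (exit_pt y)) <= Pplus y * Mf) by (apply Rmult_le_compat_l; lra). lra.
  + symmetry in Hu'. assert (Pplus y = 0) by (unfold Pplus; rewrite (proj2 (Eplus_sign y H) Hu'); apply rpow0_0l).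
    assert (c_exit y = 0) by lra. rewrite H1, H0. lra.
Qed.

(* Near Lam, L1 is small, hence so are Eplus, Eminus and, since a >= m > 0, Pplus and Pminus. *)
Lemma L2_cont_Lam x0 : Lam x0 -> m_cont_at B L2 x0.
Proof.
intros HL. destruct f_bounded as [Mf [HM0 HM]].
pose proof (HLam_int x0 HL) as Ix. pose proof ((m_interior_sub N) x0 Ix) as Nx.
intros eps Heps. rewrite (L2_Lam x0 HL).
destruct (rpow0_small m (eps / (2 * (Mf + 1))) Hm) as [t [Ht Hs]]. apply Rdiv_lt_0_compat; lra.
destruct (HL1_cont x0 Nx (Rmin (t * delta / 2) delta)) as [r [Hr Hc]]. apply Rmin_pos; nra.
exists r. split; auto. intros y By Hy. rewrite Rminus_0_r.
destruct (classic (BL y)) as [BLy|BLy]; [|rewrite L2_not_BL; auto; rewrite Rabs_R0; auto].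
specialize (Hc y (proj1 By) Hy). rewrite (HL1_Lam x0 HL) in Hc. rewrite Rminus_0_r in Hc.
assert (Hm1 := Rmin_l (t * delta / 2) delta).
pose proof (HL1_pos y (proj1 By) (proj2 BLy)). rewrite Rabs_right in Hc by lra.
destruct (Lplus_Lminus_nonneg y BLy) as [Hu Hv]. pose proof (disc_denom_pos y BLy). destruct (disc_root_spec y BLy) as [HD _].
rewrite L1_Lplus_Lminus in Hc.
destruct (E_range y BLy) as [[E1 E2] [F1 F2]].
assert (Eplus y < t).
{ unfold Eplus. apply Rle_lt_trans with (2 * Lplus y / delta).
  unfold Rdiv. apply Rmult_le_compat_l. lra. apply Rinv_le_contravar; lra.
  apply Rmult_lt_reg_r with delta; auto. unfold Rdiv. rewrite Rmult_assoc, Rinv_l by lra. lra. }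
assert (Eminus y < t).
{ unfold Eminus. apply Rle_lt_trans with (2 * Lminus y / delta).
  unfold Rdiv. apply Rmult_le_compat_l. lra. apply Rinv_le_contravar; lra.
  apply Rmult_lt_reg_r with delta; auto. unfold Rdiv. rewrite Rmult_assoc, Rinv_l by lra. lra. }
pose proof (Hma y BLy).
assert (Pplus y < eps / (2 * (Mf + 1))) by (apply Hs; auto; lra).
assert (Pminus y < eps / (2 * (Mf + 1))) by (apply Hs; auto; lra).
destruct (L2_terms_bound Mf y HM HM0 BLy) as [T1 T2].
rewrite L2_BL by auto.
assert (Mf * (Pplus y + Pminus y) < eps).
{ set (e' := eps / (2 * (Mf + 1))) in *.
  assert (Mf * (Pplus y + Pminus y) <= Mf * (2 * e')) by (apply Rmult_le_compat_l; lra).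
  assert (Mf * (2 * e') = eps - eps / (Mf + 1)) by (unfold e'; field; lra).
  assert (eps / (Mf + 1) > 0) by (apply Rdiv_lt_0_compat; lra). lra. }
eapply Rle_lt_trans. apply Rabs_triang. lra.
Qed.

(* At a tangency the weights converge only in sum (to 1), so the estimate splits off
   (c_entry + c_exit - 1) f x0. *)
Lemma L2_cont_tangent x0 : BL x0 -> den x0 = 0 -> m_cont_at BL L2 x0.
Proof.
intros H Hd.
destruct (P_cont x0 H) as [CPp CPm].
destruct (Lplus_Lminus_nonneg x0 H) as [Hu Hv].
destruct (tangent_E_eq1 x0 H Hd) as [E1 E2].
assert (Hu' : Lplus x0 > 0). { destruct (Rle_lt_or_eq_dec _ _ Hu); auto. symmetry in e. rewrite (proj2 (Eplus_sign x0 H) e) in E1. lra. }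
assert (Hv' : Lminus x0 > 0). { destruct (Rle_lt_or_eq_dec _ _ Hv); auto. symmetry in e. rewrite (proj2 (Eminus_sign x0 H) e) in E2. lra. }
assert (Pp1 : Pplus x0 = 1) by (unfold Pplus; rewrite E1; apply rpow0_1l).
assert (Pm1 : Pminus x0 = 1) by (unfold Pminus; rewrite E2; apply rpow0_1l).
assert (Hen : entry_pt x0 = x0) by (apply entry_pt_tangent; auto). assert (Hex : exit_pt x0 = x0) by (apply exit_pt_tangent; auto).
assert (L0 : L2 x0 = f x0).
{ rewrite L2_BL, Hen, Hex by auto. unfold c_entry, c_exit. destruct Req_EM_T; [|contradiction]. field. }
assert (CS : m_cont_at BL (fun y => (Pplus y + Pminus y) / (1 + Pplus y * Pminus y)) x0).
{ apply m_cont_at_div. apply m_cont_at_plus; auto. apply m_cont_at_plus. apply m_cont_at_const. apply m_cont_at_mult; auto. rewrite Pp1, Pm1. lra. }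
pose proof (f_entry_cont x0 H Hv') as Fen. pose proof (f_exit_cont x0 H Hu') as Fex.
unfold m_cont_at in Fen, Fex. rewrite Hen in Fen. rewrite Hex in Fex.
intros eps Heps.
destruct (Fen (eps / 3)) as [r1 [Hr1 H1]]. lra.
destruct (Fex (eps / 3)) as [r2 [Hr2 H2]]. lra.
destruct (CS (eps / (3 * (Rabs (f x0) + 1)))) as [r3 [Hr3 H3]].
{ apply Rdiv_lt_0_compat. lra. pose proof (Rabs_pos (f x0)). lra. }
exists (Rmin r1 (Rmin r2 r3)). split. repeat apply Rmin_pos; auto.
intros y BLy Hy. assert (Hm1 := Rmin_l r1 (Rmin r2 r3)). assert (Hm2 := Rmin_r r1 (Rmin r2 r3)).
assert (Hm3 := Rmin_l r2 r3). assert (Hm4 := Rmin_r r2 r3).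
specialize (H1 y BLy ltac:(lra)). specialize (H2 y BLy ltac:(lra)). specialize (H3 y BLy ltac:(lra)).
cbv beta in H1, H2, H3. rewrite Pp1, Pm1 in H3.
replace ((1 + 1) / (1 + 1 * 1)) with 1 in H3 by field.
destruct (c_spec y BLy) as [C1 [C2 C3]]. destruct (P_range y BLy) as [R1 R2].
rewrite L0, L2_BL by auto. rewrite <- C3 in H3.
replace (c_entry y * f (entry_pt y) + c_exit y * f (exit_pt y) - f x0) with
  (c_entry y * (f (entry_pt y) - f x0) + c_exit y * (f (exit_pt y) - f x0) + (c_entry y + c_exit y - 1) * f x0) by ring.
eapply Rle_lt_trans. apply Rabs_triang. eapply Rle_lt_trans. apply Rplus_le_compat_r. apply Rabs_triang.
rewrite !Rabs_mult. rewrite (Rabs_right (c_entry y)), (Rabs_right (c_exit y)) by lra.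
assert (c_entry y * Rabs (f (entry_pt y) - f x0) <= 1 * (eps / 3)) by (apply Rmult_le_compat; try lra; apply Rabs_pos).
assert (c_exit y * Rabs (f (exit_pt y) - f x0) <= 1 * (eps / 3)) by (apply Rmult_le_compat; try lra; apply Rabs_pos).
pose proof (Rabs_pos (f x0)).
assert (Rabs (c_entry y + c_exit y - 1) * Rabs (f x0) <= (eps / (3 * (Rabs (f x0) + 1))) * Rabs (f x0)).
{ apply Rmult_le_compat_r; lra. }
assert (eps / (3 * (Rabs (f x0) + 1)) > 0) by (apply Rdiv_lt_0_compat; lra).
assert (eps / (3 * (Rabs (f x0) + 1)) * (Rabs (f x0) + 1) = eps / 3) by (field; lra).
lra.
Qed.

Lemma c_cont_transversal x0 : BL x0 -> den x0 <> 0 -> m_cont_at BL c_entry x0 /\ m_cont_at BL c_exit x0.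
Proof.
intros H Hd. destruct (P_cont x0 H) as [CPp CPm].
assert (Cden : m_cont_at BL den x0).
{ unfold den. apply m_cont_at_minus. apply m_cont_at_const. apply m_cont_at_mult; apply (m_cont_at_comp BL _ x0 (fun z => z ^ 2)); auto;
  apply Rcont_at_sqr. }
destruct (Cden (Rabs (den x0))) as [rd [Hrd Hdn]]. apply Rabs_pos_lt; auto.
assert (Near : forall y, BL y -> d y x0 < rd -> den y <> 0).
{ intros y BLy Hy Hz. specialize (Hdn y BLy Hy). rewrite Hz, Rminus_0_l, Rabs_Ropp in Hdn. lra. }
assert (Cc1 : m_cont_at BL c_entry x0).
{ apply m_cont_at_ext with (fun y => Pminus y * (1 - Pplus y ^ 2) / den y).
  - apply m_cont_at_div; auto. apply m_cont_at_mult; auto. apply m_cont_at_minus. apply m_cont_at_const.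
    apply (m_cont_at_comp BL _ x0 (fun z => z ^ 2)); auto. apply Rcont_at_sqr.
  - exists rd. split; auto. intros y BLy Hy. unfold c_entry. destruct Req_EM_T; auto. exfalso; eapply Near; eauto.
  - unfold c_entry. destruct Req_EM_T; auto. contradiction. }
assert (Cc2 : m_cont_at BL c_exit x0).
{ apply m_cont_at_ext with (fun y => Pplus y * (1 - Pminus y ^ 2) / den y).
  - apply m_cont_at_div; auto. apply m_cont_at_mult; auto. apply m_cont_at_minus. apply m_cont_at_const.
    apply (m_cont_at_comp BL _ x0 (fun z => z ^ 2)); auto. apply Rcont_at_sqr.
  - exists rd. split; auto. intros y BLy Hy. unfold c_exit. destruct Req_EM_T; auto. exfalso; eapply Near; eauto.
  - unfold c_exit. destruct Req_EM_T; auto. contradiction. }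
split; auto.
Qed.

Lemma L2_cont_transversal x0 : BL x0 -> den x0 <> 0 -> m_cont_at BL L2 x0.
Proof.
intros H Hd. destruct f_bounded as [Mf [HM0 HM]].
destruct (P_cont x0 H) as [CPp CPm].
destruct (Lplus_Lminus_nonneg x0 H) as [Hu Hv].
destruct (c_cont_transversal x0 H Hd) as [Cc1 Cc2].
assert (CT1 : m_cont_at BL (fun y => c_entry y * f (entry_pt y)) x0).
{ destruct (Rle_lt_or_eq_dec _ _ Hv) as [Hv'|Hv'].
  - apply m_cont_at_mult; auto. apply f_entry_cont; auto.
  - symmetry in Hv'. assert (P0 : Pminus x0 = 0) by (unfold Pminus; rewrite (proj2 (Eminus_sign x0 H) Hv'); apply rpow0_0l).
    assert (c0 : c_entry x0 = 0) by (destruct (c_spec x0 H) as [C1 _]; lra).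
    apply m_cont_at_dominated with Pminus Mf; auto. rewrite c0; ring.
    intros y BLy. destruct (L2_terms_bound Mf y HM HM0 BLy) as [T1 _].
    destruct (P_range y BLy) as [_ [B1 _]]. rewrite (Rabs_right (Pminus y)); lra. }
assert (CT2 : m_cont_at BL (fun y => c_exit y * f (exit_pt y)) x0).
{ destruct (Rle_lt_or_eq_dec _ _ Hu) as [Hu'|Hu'].
  - apply m_cont_at_mult; auto. apply f_exit_cont; auto.
  - symmetry in Hu'. assert (P0 : Pplus x0 = 0) by (unfold Pplus; rewrite (proj2 (Eplus_sign x0 H) Hu'); apply rpow0_0l).
    assert (c0 : c_exit x0 = 0) by (destruct (c_spec x0 H) as [_ [C2 _]]; lra).
    apply m_cont_at_dominated with Pplus Mf; auto. rewrite c0; ring.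
    intros y BLy. destruct (L2_terms_bound Mf y HM HM0 BLy) as [_ T2].
    destruct (P_range y BLy) as [[A1 _] _]. rewrite (Rabs_right (Pplus y)); lra. }
apply m_cont_at_ext with (fun y => c_entry y * f (entry_pt y) + c_exit y * f (exit_pt y)).
- apply m_cont_at_plus; auto.
- exists 1. split. lra. intros y BLy _. rewrite L2_BL; auto.
- rewrite L2_BL; auto.
Qed.

Lemma L2_cont_BL x0 : BL x0 -> m_cont_at BL L2 x0.
Proof.
intros H. destruct (Req_EM_T (den x0) 0) as [Hd|Hd].
- apply L2_cont_tangent; auto.
- apply L2_cont_transversal; auto.
Qed.

Lemma L2_cont : m_continuous_on M B L2.
Proof.
intros x0 Bx0. destruct (classic (Lam x0)) as [HL|HL].
- apply L2_cont_Lam; auto.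
- apply m_cont_at_BL_B. split; auto. apply L2_cont_BL. split; auto.
Qed.

Definition bvp_solution (L : X -> R) : Prop :=
  m_continuous_on M B L /\
  (forall x, Lam x -> L x = 0) /\
  (exists Ld2 : X -> R,
     (forall x, BL x -> orb_deriv M Gamma phi BL L x (Ld2 x)) /\
     (forall x, BL x -> orb_deriv M Gamma phi BL Ld2 x (a x ^ 2 * L x))) /\
  (forall x, m_boundary M B x -> L x = f x).

Lemma L2_bvp_solution : bvp_solution L2.
Proof.
split; [apply L2_cont|split; [apply L2_Lam|split; [|apply L2_boundary]]].
exists L2_dot. split; intros x Hx; apply (L2_orb_deriv x Hx).
Qed.

Lemma bvp_solutions_agree L L' : bvp_solution L -> bvp_solution L' -> forall x, B x -> L x = L' x.
Proof.
intros [Hc [H0 [[Ld2 [Hd Hdd]] Hb]]] [Hc' [H0' [[Ld2' [Hd' Hdd']] Hb']]] x Bx.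
destruct (classic (Lam x)) as [HL|HL]; [rewrite H0, H0'; auto|].
apply Rminus_diag_uniq.
apply (homogeneous_solution_zero (fun y => L y - L' y) (fun y => Ld2 y - Ld2' y)); [| | | |split; auto].
- intros y By. apply m_cont_at_minus; [exact (Hc y By)|exact (Hc' y By)].
- intros y Hy. apply orb_deriv_minus; auto.
- intros y Hy. replace (a y ^ 2 * (L y - L' y)) with (a y ^ 2 * L y - a y ^ 2 * L' y) by ring.
  apply orb_deriv_minus; auto.
- intros y Hy. rewrite Hb, Hb'; auto. ring.
Qed.

Lemma catenary_bvp : exists L, bvp_solution L /\
  (forall L', bvp_solution L' -> forall x, B x -> L' x = L x) /\
  ((forall x, m_boundary M B x -> f x > 0) -> forall x, BL x -> L x > 0).
Proof.
exists L2. split; [apply L2_bvp_solution|split; [|apply L2_pos]].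
intros L' HL'. apply bvp_solutions_agree; auto. apply L2_bvp_solution.
Qed.

End Catenary.

Theorem mainTheorem10 (M : Metric_Space)
  (Gamma : R -> Base M -> Prop) (phi : R -> Base M -> Base M)
  (Lam N : Base M -> Prop) (L1 : Base M -> R) (delta : R)
  (a f : Base M -> R) :
  partial_flow M Gamma phi ->
  invariant M Gamma phi Lam ->
  isolating_neighborhood M Gamma phi Lam N ->
  catenary M Gamma phi Lam N L1 ->
  delta > 0 ->
  (forall x, N x -> L1 x <= delta -> m_interior M N x) ->
  let B := fun x => N x /\ L1 x <= delta in
  let BL := fun x => B x /\ ~ Lam x in
  (forall x, BL x -> a x > 0) ->
  m_continuous_on M BL a ->
  (forall x, BL x -> orb_deriv M Gamma phi BL a x 0) ->
  (exists m, m > 0 /\ forall x, BL x -> m <= a x) ->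
  m_continuous_on M (m_boundary M B) f ->
  let P := fun L2 : Base M -> R =>
    m_continuous_on M B L2 /\
    (forall x, Lam x -> L2 x = 0) /\
    (exists L2d : Base M -> R,
       (forall x, BL x -> orb_deriv M Gamma phi BL L2 x (L2d x)) /\
       (forall x, BL x -> orb_deriv M Gamma phi BL L2d x (a x ^ 2 * L2 x))) /\
    (forall x, m_boundary M B x -> L2 x = f x) in
  exists L2 : Base M -> R,
    P L2 /\
    (forall L2' : Base M -> R, P L2' -> forall x, B x -> L2' x = L2 x) /\
    ((forall x, m_boundary M B x -> f x > 0) -> forall x, BL x -> L2 x > 0).
Proof.
intros Hflow Hinv [HN_compact [HLam_int _]] [HL1_cont [HL1_Lam [HL1_pos [Ld [HL1_d HLd_d]]]]]
  Hdelta HB_int B BL Ha_pos Ha_cont Ha_d [m [Hm Hma]] Hf_cont P.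
eapply catenary_bvp; eauto.
Qed.
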